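(* Let $M$ be a generic regular closed curve. If $\mathrm{CSS}(M)$ has an asymptote $L$, then $\mathrm{CSS}(M)$ approaches $L$ from opposite sides of $L$ and at opposite ends of $L$; that is, near $L$ the Centre Symmetry Set consists of two parts, lying on opposite sides of $L$, one tending to infinity along $L$ in one direction and the other in the opposite direction.
   Context: Generic means $M$ is the image of $f\in C^\infty(S^1,\mathbb{R}^2)$ which is regular, with only transversal self-crossings, only non-degenerate inflexion points and no undulation points, such that at least one point of each parallel pair is not an inflexion point, and satisfying further non-degeneracy conditions on parallel pairs which guarantee: the CSS is a union of smooth curves with at most cusp singularities, it has no double asymptotes (no two asymptotes coinciding as lines), and its curvature changes sign in a neighbourhood of each asymptote. Two distinct points of $M$ form a parallel pair if their tangent lines are parallel; $\mathrm{CSS}(M)$ is the envelope of lines through parallel pairs, locally parameterized near a parallel pair $a=f(s)$, $b=g(t(s))$ (local arc-length parameterizations with $f'(s)=-g'(t(s))$) by $\frac{\kappa_f(s)f(s)+\kappa_g(t(s))g(t(s))}{\kappa_f(s)+\kappa_g(t(s))}$; where $\kappa_f+\kappa_g=0$ the line through the pair is an asymptote. *)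

From Stdlib Require Import Reals ZArith.
From Coquelicot Require Import Coquelicot.
Open Scope R_scope.

Definition pt := (R * R)%type.
Definition padd (p q : pt) : pt := (fst p + fst q, snd p + snd q).
Definition psub (p q : pt) : pt := (fst p - fst q, snd p - snd q).
Definition pscal (c : R) (p : pt) : pt := (c * fst p, c * snd p).
Definition dot (p q : pt) : R := fst p * fst q + snd p * snd q.
Definition det (p q : pt) : R := fst p * snd q - snd p * fst q.
Definition vnorm (p : pt) : R := sqrt (dot p p).

(** A parametrized plane curve; closed curves are 1-periodic maps R -> R^2,
    i.e. maps S^1 = R/Z -> R^2. *)
Definition curve := R -> pt.

Definition smooth_curve (f : curve) : Prop :=
  forall (n : nat) (s : R),
    ex_derive_n (fun u => fst (f u)) n s /\ ex_derive_n (fun u => snd (f u)) n s.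

Definition closed_curve (f : curve) : Prop :=
  smooth_curve f /\ forall s, f (s + 1) = f s.

Definition d1 (f : curve) (s : R) : pt :=
  (Derive (fun u => fst (f u)) s, Derive (fun u => snd (f u)) s).
Definition d2 (f : curve) (s : R) : pt :=
  (Derive_n (fun u => fst (f u)) 2 s, Derive_n (fun u => snd (f u)) 2 s).

Definition regular (f : curve) : Prop := forall s, d1 f s <> (0, 0).

(** u and v represent the same point of S^1 = R/Z *)
Definition same_param (u v : R) : Prop := exists k : Z, v = u + IZR k.

(** signed curvature (w.r.t. the orientation of the parametrization) *)
Definition curvature (f : curve) (s : R) : R :=
  det (d1 f s) (d2 f s) / (vnorm (d1 f s)) ^ 3.

Definition inflexion (f : curve) (s : R) : Prop := curvature f s = 0.

(** undulation point: tangent with contact of order >= 4 *)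
Definition undulation (f : curve) (s : R) : Prop :=
  curvature f s = 0 /\ Derive (curvature f) s = 0.

Definition transversal_self_crossings (f : curve) : Prop :=
  forall u v, ~ same_param u v -> f u = f v -> det (d1 f u) (d1 f v) <> 0.

Definition nondegenerate_inflexions (f : curve) : Prop :=
  forall s, inflexion f s -> Derive (curvature f) s <> 0.

Definition parallel_pair (f : curve) (u v : R) : Prop :=
  f u <> f v /\ det (d1 f u) (d1 f v) = 0.

(** Curvature kappa_g of the second point b = f v, computed for a local
    arc-length parametrization g with f'(u) = - g'(t) (f locally oriented as
    the global parametrization at u).  The factor dot/(norm*norm) is +-1 at a
    parallel pair: it is -1 when the global tangents are opposite (g has the
    global orientation) and +1 when they agree (g has the reversed one). *)
Definition kappa_g (f : curve) (u v : R) : R :=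
  - (dot (d1 f u) (d1 f v) / (vnorm (d1 f u) * vnorm (d1 f v))) * curvature f v.

Definition css_denom (f : curve) (u v : R) : R := curvature f u + kappa_g f u v.

Definition css_point (f : curve) (u v : R) : pt :=
  pscal (/ css_denom f u v)
        (padd (pscal (curvature f u) (f u)) (pscal (kappa_g f u v) (f v))).

Definition CSS (f : curve) (x : pt) : Prop :=
  exists u v, parallel_pair f u v /\ css_denom f u v <> 0 /\ x = css_point f u v.

(** parallel pair whose line is an asymptote of the CSS *)
Definition asymptotic_pair (f : curve) (u v : R) : Prop :=
  parallel_pair f u v /\ css_denom f u v = 0.

Definition on_line (a b x : pt) : Prop := det (psub b a) (psub x a) = 0.
Definition same_line (a b a' b' : pt) : Prop :=
  forall x, on_line a b x <-> on_line a' b' x.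

Definition no_double_asymptotes (f : curve) : Prop :=
  forall u v u' v', asymptotic_pair f u v -> asymptotic_pair f u' v' ->
    same_line (f u) (f v) (f u') (f v') ->
    (same_param u u' /\ same_param v v') \/ (same_param u v' /\ same_param v u').

Definition local_branch (f : curve) (u0 v0 delta : R) (tau : R -> R) : Prop :=
  0 < delta /\ tau u0 = v0 /\
  (forall s, Rabs (s - u0) < delta -> parallel_pair f s (tau s)) /\
  (forall (n : nat) s, Rabs (s - u0) < delta -> ex_derive_n tau n s).

Definition branch_css_curv_num (f : curve) (tau : R -> R) (s : R) : R :=
  let c := fun r => css_point f r (tau r) in det (d1 c s) (d2 c s).

Definition asymptotes_nondegenerate (f : curve) : Prop :=
  forall u0 v0, asymptotic_pair f u0 v0 ->
    exists delta tau, local_branch f u0 v0 delta tau /\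
      Derive (fun s => css_denom f s (tau s)) u0 <> 0 /\
      (forall s1 s2, u0 - delta < s1 < u0 -> u0 < s2 < u0 + delta ->
         branch_css_curv_num f tau s1 * branch_css_curv_num f tau s2 < 0).

Definition generic (f : curve) : Prop :=
  closed_curve f /\ regular f /\ transversal_self_crossings f /\
  nondegenerate_inflexions f /\ (forall s, ~ undulation f s) /\
  (forall u v, parallel_pair f u v -> ~ inflexion f u \/ ~ inflexion f v) /\
  no_double_asymptotes f /\ asymptotes_nondegenerate f.

(** coordinates relative to the line L through a = f u0, b = f v0:
    [along] is the (scaled) position along L in direction b - a,
    [across] the (scaled) signed distance from L. *)
Definition along (f : curve) (u0 v0 : R) (x : pt) : R :=
  dot (psub x (f u0)) (psub (f v0) (f u0)).
Definition across (f : curve) (u0 v0 : R) (x : pt) : R :=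
  det (psub (f v0) (f u0)) (psub x (f u0)).

(** Near the asymptote [L] through the asymptotic pair [(u0, v0)], the CSS
    is the image of the branch [s |-> css_point f s (tau s)] of parallel pairs
    through [(u0, v0)]: by compactness, CSS points close to [L] and far away
    come from parallel pairs close to [(u0, v0)], because genericity excludes
    the other possible limits (the diagonal, where the CSS stays bounded,
    transversal self-crossings, and other asymptotes on the same line).
    In coordinates along and across [L], the branch is [(P s / D s, Q s / D s)]
    where [D = kappa_f + kappa_g] has a simple zero at [u0], [P u0 <> 0] and
    [Q] vanishes to second order; so the two halves [s < u0] and [s > u0]
    escape to opposite ends of [L] while approaching it. Each half is an arc
    of constant turning escaping along [L], hence stays on one side of [L],
    and since the curvature of the CSS changes sign at [u0] the two sides are
    opposite. *)

From Stdlib Require Import Reals Lra Lia ZArith Classical ClassicalEpsilon.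
From Coquelicot Require Import Coquelicot.
(* Imported last, since Stdlib's [Reals] also defines a [d1]. *)
Open Scope R_scope.

Fixpoint Cn_on (n : nat) (U : R -> Prop) (g : R -> R) : Prop :=
  match n with
  | O => forall x, U x -> continuous g x
  | S m => (forall x, U x -> ex_derive g x) /\ Cn_on m U (Derive g)
  end.

Definition smooth_on (U : R -> Prop) (g : R -> R) : Prop := forall n, Cn_on n U g.

Definition smooth (g : R -> R) : Prop := smooth_on (fun _ => True) g.

Lemma open_whole_line : open (fun _ : R => True).
Proof. apply open_true. Qed.

Lemma ex_derive_continuous_R (g : R -> R) x : ex_derive g x -> continuous g x.
Proof. exact (@ex_derive_continuous R_AbsRing R_NormedModule g x). Qed.

Lemma ex_derive_plus_R (g h : R -> R) x :
  ex_derive g x -> ex_derive h x -> ex_derive (fun y => g y + h y) x.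
Proof. exact (@ex_derive_plus R_AbsRing R_NormedModule g h x). Qed.

Lemma ex_derive_opp_R (g : R -> R) x : ex_derive g x -> ex_derive (fun y => - g y) x.
Proof. exact (@ex_derive_opp R_AbsRing R_NormedModule g x). Qed.

Lemma ex_derive_comp_R (g t : R -> R) x :
  ex_derive g (t x) -> ex_derive t x -> ex_derive (fun y => g (t y)) x.
Proof. exact (@ex_derive_comp R_AbsRing R_NormedModule g t x). Qed.

Section CnOnAlgebra.
Variable U : R -> Prop.
Hypothesis HU : open U.

Lemma Cn_on_continuous n g : Cn_on n U g -> forall x, U x -> continuous g x.
Proof.
  destruct n as [|n]; simpl; auto.
  intros [H _] x Hx. apply ex_derive_continuous_R. auto.
Qed.

Lemma Cn_on_S n g : Cn_on (S n) U g -> Cn_on n U g.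
Proof.
  revert g; induction n as [|n IH]; intros g H.
  - simpl. apply (Cn_on_continuous 1). exact H.
  - destruct H as [H1 H2]. split; auto.
Qed.

Lemma Cn_on_ext n g h : (forall x, U x -> g x = h x) -> Cn_on n U g -> Cn_on n U h.
Proof.
  assert (Hloc : forall x, U x -> locally x U) by (intros x Hx; apply HU, Hx).
  revert g h; induction n as [|n IH]; intros g h E H.
  - intros x Hx. apply (continuous_ext_loc (T:=R_UniformSpace) (U:=R_UniformSpace) h g x).
    + apply (filter_imp U); auto.
    + apply H, Hx.
  - destruct H as [H1 H2]. split.
    + intros x Hx. apply (ex_derive_ext_loc g h x); auto.
      apply (filter_imp U); auto.
    + apply (IH (Derive g)); auto.
      intros x Hx. apply Derive_ext_loc. apply (filter_imp U); auto.
Qed.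

Lemma Cn_on_const n c : Cn_on n U (fun _ => c).
Proof.
  revert c; induction n as [|n IH]; intros c; simpl.
  - intros; apply continuous_const.
  - split.
    + intros; apply ex_derive_const.
    + apply (Cn_on_ext n (fun _ => 0)); [|apply IH].
      intros; rewrite Derive_const; auto.
Qed.

Lemma Cn_on_id n : Cn_on n U (fun x => x).
Proof.
  destruct n as [|n]; simpl.
  - intros; apply continuous_id.
  - split.
    + intros; apply ex_derive_id.
    + apply (Cn_on_ext n (fun _ => 1)); [|apply Cn_on_const].
      intros; rewrite Derive_id; reflexivity.
Qed.

Lemma Cn_on_plus n g h : Cn_on n U g -> Cn_on n U h -> Cn_on n U (fun x => g x + h x).
Proof.
  revert g h; induction n as [|n IH]; intros g h Hg Hh; simpl in *.
  - intros x Hx. apply (continuous_plus g h); auto.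
  - destruct Hg as [Hg1 Hg2], Hh as [Hh1 Hh2]. split.
    + intros; apply ex_derive_plus_R; auto.
    + apply (Cn_on_ext n (fun x => Derive g x + Derive h x)); [|apply IH; auto].
      intros; rewrite Derive_plus; auto.
Qed.

Lemma Cn_on_opp n g : Cn_on n U g -> Cn_on n U (fun x => - g x).
Proof.
  revert g; induction n as [|n IH]; intros g Hg; simpl in *.
  - intros x Hx. apply (continuous_opp g); auto.
  - destruct Hg as [Hg1 Hg2]. split.
    + intros; apply ex_derive_opp_R; auto.
    + apply (Cn_on_ext n (fun x => - Derive g x)); [|apply IH; auto].
      intros; rewrite Derive_opp; auto.
Qed.

Lemma Cn_on_minus n g h : Cn_on n U g -> Cn_on n U h -> Cn_on n U (fun x => g x - h x).
Proof. intros; apply Cn_on_plus; auto. apply Cn_on_opp; auto. Qed.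

Lemma Cn_on_mult n g h : Cn_on n U g -> Cn_on n U h -> Cn_on n U (fun x => g x * h x).
Proof.
  revert g h; induction n as [|n IH]; intros g h Hg Hh.
  - intros x Hx. apply (continuous_mult g h); [apply Hg | apply Hh]; auto.
  - assert (Hg' := Cn_on_S _ _ Hg). assert (Hh' := Cn_on_S _ _ Hh).
    destruct Hg as [Hg1 Hg2], Hh as [Hh1 Hh2]. split.
    + intros; apply ex_derive_mult; auto.
    + apply (Cn_on_ext n (fun x => Derive g x * h x + g x * Derive h x)).
      * intros; rewrite Derive_mult; auto.
      * apply Cn_on_plus; apply IH; auto.
Qed.

Lemma Cn_on_inv n g : (forall x, U x -> g x <> 0) -> Cn_on n U g -> Cn_on n U (fun x => / g x).
Proof.
  revert g; induction n as [|n IH]; intros g Hnz Hg.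
  - intros x Hx. apply continuity_pt_filterlim, continuity_pt_inv; auto.
    apply continuity_pt_filterlim, Hg, Hx.
  - assert (Hg' := Cn_on_S _ _ Hg).
    destruct Hg as [Hg1 Hg2]. split.
    + intros; apply ex_derive_inv; auto.
    + apply (Cn_on_ext n (fun x => - (Derive g x * (/ g x * / g x)))).
      * intros; rewrite Derive_inv; auto. field. auto.
      * apply Cn_on_opp, Cn_on_mult; auto. apply Cn_on_mult; auto.
Qed.

Lemma Cn_on_div n g h :
  (forall x, U x -> h x <> 0) -> Cn_on n U g -> Cn_on n U h -> Cn_on n U (fun x => g x / h x).
Proof. intros; apply Cn_on_mult; auto. apply Cn_on_inv; auto. Qed.

Lemma Cn_on_pow n g k : Cn_on n U g -> Cn_on n U (fun x => g x ^ k).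
Proof.
  intros H. induction k as [|k IH]; simpl.
  - apply Cn_on_const.
  - apply Cn_on_mult; auto.
Qed.

Lemma Cn_on_sqrt n g : (forall x, U x -> 0 < g x) -> Cn_on n U g -> Cn_on n U (fun x => sqrt (g x)).
Proof.
  revert g; induction n as [|n IH]; intros g Hp Hg.
  - intros x Hx. apply continuity_pt_filterlim, (continuity_pt_comp g sqrt).
    + apply continuity_pt_filterlim, Hg, Hx.
    + apply continuity_pt_sqrt. generalize (Hp x Hx); lra.
  - assert (Hg' := Cn_on_S _ _ Hg).
    destruct Hg as [Hg1 Hg2].
    assert (Hd : forall x, U x -> is_derive (fun y => sqrt (g y)) x (Derive g x / (2 * sqrt (g x)))).
    { intros x Hx. apply is_derive_sqrt; auto. apply Derive_correct; auto. }
    split.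
    + intros x Hx. eexists. apply Hd, Hx.
    + apply (Cn_on_ext n (fun x => Derive g x * (/ 2 * / sqrt (g x)))).
      * intros x Hx. symmetry. apply is_derive_unique.
        replace (Derive g x * (/ 2 * / sqrt (g x))) with (Derive g x / (2 * sqrt (g x))).
        -- apply Hd, Hx.
        -- field. apply Rgt_not_eq, sqrt_lt_R0; auto.
      * apply Cn_on_mult; auto. apply Cn_on_mult; [apply Cn_on_const|].
        apply Cn_on_inv; [|apply IH; auto].
        intros x Hx; apply Rgt_not_eq, sqrt_lt_R0; auto.
Qed.

End CnOnAlgebra.

Lemma Cn_on_subset n U V g : (forall x, V x -> U x) -> Cn_on n U g -> Cn_on n V g.
Proof.
  revert g; induction n as [|n IH]; simpl; intros g HVU H.
  - intros; apply H; auto.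
  - destruct H as [H1 H2]. split; auto.
Qed.

Lemma smooth_restrict U g : smooth g -> smooth_on U g.
Proof. intros H n. apply (Cn_on_subset n (fun _ => True)); auto. Qed.

Lemma Cn_on_comp n U V g t : open U -> open V ->
  (forall x, U x -> V (t x)) -> Cn_on n V g -> Cn_on n U t -> Cn_on n U (fun x => g (t x)).
Proof.
  revert U V g t; induction n as [|n IH]; intros U V g t HU HV Hm Hg Ht.
  - intros x Hx. apply (continuous_comp t g); [apply Ht | apply Hg]; auto.
  - assert (Ht' : Cn_on n U t) by (apply Cn_on_S; auto).
    destruct Hg as [Hg1 Hg2], Ht as [Ht1 Ht2]. split.
    + intros; apply ex_derive_comp_R; auto.
    + apply (Cn_on_ext U HU n (fun x => Derive t x * Derive g (t x))).
      * intros x Hx; rewrite (Derive_comp g t x); auto.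
      * apply Cn_on_mult; auto. apply (IH U V); auto.
Qed.

Lemma Derive_n_Derive g m x : Derive_n (Derive g) m x = Derive_n g (S m) x.
Proof.
  revert x; induction m as [|m IH]; intros x; simpl; auto.
  apply Derive_ext. intros; apply IH.
Qed.

Lemma smooth_on_of_ex_derive_n U g : (forall n x, U x -> ex_derive_n g n x) -> smooth_on U g.
Proof.
  intros H n. revert g H. induction n as [|n IH]; intros g H; simpl.
  - intros x Hx. apply ex_derive_continuous_R, (H 1%nat x Hx).
  - split.
    + intros x Hx. apply (H 1%nat x Hx).
    + apply IH. intros [|m] x Hx; simpl.
      * exact I.
      * apply (ex_derive_ext (Derive_n g (S m))).
        -- intros; symmetry; apply Derive_n_Derive.
        -- apply (H (S (S m)) x Hx).
Qed.

Lemma smooth_on_Derive U g : smooth_on U g -> smooth_on U (Derive g).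
Proof. intros H n. apply (H (S n)). Qed.

Lemma smooth_on_ex_derive U g : smooth_on U g -> forall x, U x -> ex_derive g x.
Proof. intros H. apply (H 1%nat). Qed.

Lemma smooth_on_continuous U g : smooth_on U g -> forall x, U x -> continuous g x.
Proof. intros H. apply (H 0%nat). Qed.

Lemma smooth_continuous g x : smooth g -> continuous g x.
Proof. intros H. apply (smooth_on_continuous _ _ H); exact I. Qed.

Lemma smooth_ex_derive g x : smooth g -> ex_derive g x.
Proof. intros H. apply (smooth_on_ex_derive _ _ H); exact I. Qed.

Lemma smooth_is_derive g x : smooth g -> is_derive g x (Derive g x).
Proof. intros H. apply Derive_correct, smooth_ex_derive, H. Qed.

Ltac solve_Cn_on HU :=
  first
  [ assumption
  | apply Cn_on_const; exact HU
  | apply Cn_on_id; exact HU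
  | apply Cn_on_plus; [exact HU | solve_Cn_on HU | solve_Cn_on HU]
  | apply Cn_on_minus; [exact HU | solve_Cn_on HU | solve_Cn_on HU]
  | apply Cn_on_opp; [exact HU | solve_Cn_on HU]
  | apply Cn_on_div; [exact HU | | solve_Cn_on HU | solve_Cn_on HU]
  | apply Cn_on_mult; [exact HU | solve_Cn_on HU | solve_Cn_on HU]
  | apply Cn_on_inv; [exact HU | | solve_Cn_on HU]
  | apply Cn_on_pow; [exact HU | solve_Cn_on HU]
  | idtac ].

Lemma continuous_eps_delta (g : R -> R) x : continuous g x ->
  forall eps, 0 < eps -> exists d, 0 < d /\ forall y, Rabs (y - x) < d -> Rabs (g y - g x) < eps.
Proof.
  intros H eps He.
  apply continuity_pt_filterlim, continuity_pt_locally with (eps := mkposreal eps He) in H.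
  destruct H as [d Hd]. exists d. split; [apply cond_pos | exact Hd].
Qed.

Lemma open_interval a b : open (fun s => a < s < b).
Proof. apply open_and; [apply open_gt | apply open_lt]. Qed.

Lemma locally_interval a b x : a < x < b -> locally x (fun s => a < s < b).
Proof. apply open_interval. Qed.

Lemma is_derive_first_order (g : R -> R) x l : is_derive g x l ->
  forall eps, 0 < eps -> exists d, 0 < d /\ forall y, Rabs (y - x) < d ->
    Rabs (g y - g x - l * (y - x)) <= eps * Rabs (y - x).
Proof.
  intros H eps He. apply is_derive_Reals in H.
  destruct (H eps He) as [d Hd]. exists d. split; [apply cond_pos|].
  intros y Hy. destruct (Req_dec y x) as [->|E].
  - replace (g x - g x - l * (x - x)) with 0 by ring.
    rewrite Rabs_R0, Rminus_diag_eq, Rabs_R0; lra.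
  - specialize (Hd (y - x) ltac:(lra) Hy). replace (x + (y - x)) with y in Hd by ring.
    replace (g y - g x - l * (y - x)) with (((g y - g x) / (y - x) - l) * (y - x)) by (field; lra).
    rewrite Rabs_mult. apply Rmult_le_compat_r; [apply Rabs_pos | lra].
Qed.

Lemma Rmult_perturb a a0 b b0 e : Rabs (a - a0) < e -> Rabs (b - b0) < e -> e <= 1 ->
  Rabs (a * b - a0 * b0) <= e * (Rabs a0 + Rabs b0 + 1).
Proof.
  intros Ha Hb He.
  replace (a * b - a0 * b0) with ((a - a0) * b + a0 * (b - b0)) by ring.
  eapply Rle_trans; [apply Rabs_triang|]. rewrite !Rabs_mult.
  assert (Hb' : Rabs b <= Rabs b0 + 1).
  { replace b with ((b - b0) + b0) by ring. eapply Rle_trans; [apply Rabs_triang | lra]. }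
  assert (0 <= Rabs (a - a0)) by apply Rabs_pos.
  assert (0 <= Rabs a0) by apply Rabs_pos.
  assert (Rabs (a - a0) * Rabs b <= e * (Rabs b0 + 1)).
  { apply Rmult_le_compat; try lra. apply Rabs_pos. }
  assert (Rabs a0 * Rabs (b - b0) <= Rabs a0 * e) by (apply Rmult_le_compat_l; lra).
  nra.
Qed.

Lemma det_perturb a1 a2 b1 b2 c1 c2 d1 d2 e :
  Rabs (a1 - c1) < e -> Rabs (a2 - c2) < e -> Rabs (b1 - d1) < e -> Rabs (b2 - d2) < e -> e <= 1 ->
  Rabs ((a1 * b2 - a2 * b1) - (c1 * d2 - c2 * d1)) <=
    e * (2 * (Rabs c1 + Rabs c2 + Rabs d1 + Rabs d2 + 1)).
Proof.
  intros H1 H2 H3 H4 He.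
  assert (E1 := Rmult_perturb a1 c1 b2 d2 e H1 H4 He).
  assert (E2 := Rmult_perturb a2 c2 b1 d1 e H2 H3 He).
  replace ((a1 * b2 - a2 * b1) - (c1 * d2 - c2 * d1))
    with ((a1 * b2 - c1 * d2) - (a2 * b1 - c2 * d1)) by ring.
  eapply Rle_trans; [apply Rabs_triang|]. rewrite Rabs_Ropp.
  assert (0 <= Rabs c1) by apply Rabs_pos. assert (0 <= Rabs c2) by apply Rabs_pos.
  assert (0 <= Rabs d1) by apply Rabs_pos. assert (0 <= Rabs d2) by apply Rabs_pos.
  assert (0 <= e) by (generalize (Rabs_pos (a1 - c1)); lra).
  nra.
Qed.

Lemma is_derive_eq (g : R -> R) (x a b : R) : is_derive g x a -> a = b -> is_derive g x b.
Proof. intros H <-; exact H. Qed.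

Lemma is_derive_ext_R (g h : R -> R) (x a : R) :
  (forall y, g y = h y) -> is_derive g x a -> is_derive h x a.
Proof. exact (@is_derive_ext R_AbsRing R_NormedModule g h x a). Qed.

Lemma is_derive_plus_R (g h : R -> R) (x a b : R) :
  is_derive g x a -> is_derive h x b -> is_derive (fun y => g y + h y) x (a + b).
Proof. exact (@is_derive_plus R_AbsRing R_NormedModule g h x a b). Qed.

Lemma is_derive_minus_R (g h : R -> R) (x a b : R) :
  is_derive g x a -> is_derive h x b -> is_derive (fun y => g y - h y) x (a - b).
Proof. exact (@is_derive_minus R_AbsRing R_NormedModule g h x a b). Qed.

Lemma is_derive_opp_R (g : R -> R) (x a : R) :
  is_derive g x a -> is_derive (fun y => - g y) x (- a).
Proof. exact (@is_derive_opp R_AbsRing R_NormedModule g x a). Qed.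

Lemma is_derive_mult_R (g h : R -> R) (x a b : R) :
  is_derive g x a -> is_derive h x b -> is_derive (fun y => g y * h y) x (a * h x + g x * b).
Proof. intros H1 H2. exact (@is_derive_mult R_AbsRing g h x a b H1 H2 Rmult_comm). Qed.

Lemma is_derive_const_R (c x : R) : is_derive (fun _ : R => c) x 0.
Proof. exact (@is_derive_const R_AbsRing R_NormedModule c x). Qed.

Lemma is_derive_id_R (x : R) : is_derive (fun y : R => y) x 1.
Proof. exact (@is_derive_id R_AbsRing x). Qed.

Lemma is_derive_comp_R (g t : R -> R) (x a b : R) :
  is_derive g (t x) a -> is_derive t x b -> is_derive (fun y => g (t y)) x (b * a).
Proof. exact (@is_derive_comp R_AbsRing R_NormedModule g t x a b). Qed.

Lemma is_derive_same_value (g : R -> R) (x a b : R) : is_derive g x a -> is_derive g x b -> a = b.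
Proof. intros H1 H2. rewrite <- (is_derive_unique g x a H1). apply is_derive_unique, H2. Qed.

Lemma derive_neq0_injective (G G' : R -> R) lo hi a b :
  (forall z, lo < z < hi -> is_derive G z (G' z)) -> (forall z, lo < z < hi -> G' z <> 0) ->
  lo < a < hi -> lo < b < hi -> G a = G b -> a = b.
Proof.
  intros Hd Hnz Ha Hb E.
  assert (K : forall x y, lo < x < hi -> lo < y < hi -> x < y -> G x <> G y).
  { intros x y Hx Hy Hxy E'.
    destruct (MVT_cor2 G G' x y Hxy) as [c [Hc1 Hc2]].
    - intros c Hc. apply is_derive_Reals, Hd. lra.
    - assert (Hc : G' c * (y - x) = 0) by lra.
      apply Rmult_integral in Hc as [Hc|Hc]; [apply (Hnz c); auto; lra | lra]. }
  destruct (Rtotal_order a b) as [h|[h|h]]; auto.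
  - exfalso; apply (K a b); auto.
  - exfalso; apply (K b a); auto.
Qed.

Definition sgn (x : R) : R := if Rle_dec 0 x then 1 else -1.

Lemma sgn_mul_self x : sgn x * sgn x = 1.
Proof. unfold sgn; destruct (Rle_dec 0 x); ring. Qed.

Lemma sgn_mul_pos x : x <> 0 -> 0 < sgn x * x.
Proof. unfold sgn; destruct (Rle_dec 0 x); intros; lra. Qed.

Lemma sgn_cases x : sgn x = 1 \/ sgn x = -1.
Proof. unfold sgn; destruct (Rle_dec 0 x); auto. Qed.

Lemma Rabs_mult_unit e x : e * e = 1 -> Rabs (e * x) = Rabs x.
Proof.
  intros He. rewrite Rabs_mult.
  assert (Rabs e * Rabs e = 1) by (rewrite <- Rabs_mult, He; apply Rabs_R1).
  assert (0 <= Rabs e) by apply Rabs_pos.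
  replace (Rabs e) with 1 by nra. ring.
Qed.

Lemma Rmult_pos_of_close a b : Rabs (a - b) < Rabs b -> 0 < a * b.
Proof.
  intros H. destruct (Rle_or_lt 0 b) as [hb|hb].
  - rewrite (Rabs_pos_eq b) in H by lra. apply Rabs_def2 in H. nra.
  - rewrite (Rabs_left b) in H by lra. apply Rabs_def2 in H. nra.
Qed.

Lemma Rmult_pos_of_half_close a b : Rabs (a - b) <= Rabs b / 2 -> b <> 0 -> 0 < a * b.
Proof.
  intros H Hb. apply Rmult_pos_of_close. assert (0 < Rabs b) by (apply Rabs_pos_lt; auto). lra.
Qed.

Lemma pos_of_mult_pos_r x y : 0 < x * y -> 0 < y -> 0 < x.
Proof. intros H1 H2. destruct (Rle_or_lt x 0); auto. nra. Qed.

Lemma det_sign_near (a b c d : R -> R) x y :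
  continuous a x -> continuous b x -> continuous c y -> continuous d y ->
  a x * d y - b x * c y <> 0 ->
  exists r, 0 < r /\ forall u z, Rabs (u - x) < r -> Rabs (z - y) < r ->
    0 < (a u * d z - b u * c z) * (a x * d y - b x * c y).
Proof.
  intros Ca Cb Cc Cd Hc0. set (c0 := a x * d y - b x * c y) in *.
  assert (Hc0p : 0 < Rabs c0) by (apply Rabs_pos_lt; auto).
  set (M := 2 * (Rabs (a x) + Rabs (b x) + Rabs (c y) + Rabs (d y) + 1)).
  assert (HM : 0 < M).
  { unfold M. generalize (Rabs_pos (a x)) (Rabs_pos (b x)) (Rabs_pos (c y)) (Rabs_pos (d y)). lra. }
  set (e := Rmin 1 (Rabs c0 / (2 * M))).
  assert (He : 0 < e) by (apply Rmin_pos; [lra | apply Rdiv_lt_0_compat; lra]).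
  assert (HeM : e * M <= Rabs c0 / 2).
  { assert (H : e <= Rabs c0 / (2 * M)) by apply Rmin_r.
    apply (Rmult_le_compat_r M) in H; [|lra].
    replace (Rabs c0 / (2 * M) * M) with (Rabs c0 / 2) in H by (field; lra). lra. }
  destruct (continuous_eps_delta _ _ Ca e He) as [ra [Hra Ea]].
  destruct (continuous_eps_delta _ _ Cb e He) as [rb [Hrb Eb]].
  destruct (continuous_eps_delta _ _ Cc e He) as [rc [Hrc Ec]].
  destruct (continuous_eps_delta _ _ Cd e He) as [rd [Hrd Ed]].
  exists (Rmin (Rmin ra rb) (Rmin rc rd)). split; [repeat apply Rmin_pos; auto|].
  intros u z Hu Hz.
  assert (Hm1 := Rmin_l (Rmin ra rb) (Rmin rc rd)). assert (Hm2 := Rmin_r (Rmin ra rb) (Rmin rc rd)).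
  assert (Hm3 := Rmin_l ra rb). assert (Hm4 := Rmin_r ra rb).
  assert (Hm5 := Rmin_l rc rd). assert (Hm6 := Rmin_r rc rd).
  assert (P := det_perturb (a u) (b u) (c z) (d z) (a x) (b x) (c y) (d y) e
    (Ea u ltac:(lra)) (Eb u ltac:(lra)) (Ec z ltac:(lra)) (Ed z ltac:(lra)) (Rmin_l _ _)).
  apply Rmult_pos_of_close. fold c0 M in P. lra.
Qed.

Lemma sign_transfer e x y : e * e = 1 -> 0 < x * y -> 0 < e * y -> 0 < e * x.
Proof.
  intros He Hxy Hy. apply (pos_of_mult_pos_r _ (e * y)); auto.
  replace (e * x * (e * y)) with ((e * e) * (x * y)) by ring. rewrite He. lra.
Qed.

Lemma is_derive_reflect (g : R -> R) c dg t :
  is_derive g (c - t) dg -> is_derive (fun y => g (c - y)) t (- dg).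
Proof.
  intros H. eapply is_derive_eq.
  - apply (is_derive_comp_R g (fun y => c - y)); [exact H|].
    apply is_derive_minus_R; [apply is_derive_const_R | apply is_derive_id_R].
  - ring.
Qed.

Lemma Derive_periodic (g : R -> R) c s :
  (forall y, g (y + c) = g y) -> ex_derive g (s + c) -> Derive g (s + c) = Derive g s.
Proof.
  intros Hp Hd. rewrite <- (Derive_ext (fun y => g (y + c)) g s Hp).
  rewrite (Derive_comp g (fun y => y + c) s); auto.
  - replace (Derive (fun y => y + c) s) with 1; [ring|].
    symmetry; apply is_derive_unique; auto_derive; auto; ring.
  - auto_derive; auto.
Qed.

Lemma lagrange_identity (p q : pt) :
  dot p q * dot p q + det p q * det p q = dot p p * dot q q.
Proof. unfold dot, det. ring. Qed.

Lemma dot_self_pos (p : pt) : p <> (0, 0) -> 0 < dot p p.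
Proof.
  destruct p as [a b]. unfold dot; simpl. intros H.
  destruct (Req_dec a 0) as [->|Ha]; [destruct (Req_dec b 0) as [->|Hb]|].
  - contradiction.
  - assert (0 < b * b) by (apply Rsqr_pos_lt; auto). lra.
  - assert (0 < a * a) by (apply Rsqr_pos_lt; auto). nra.
Qed.

Lemma vnorm_sq (p : pt) : vnorm p * vnorm p = dot p p.
Proof. apply sqrt_sqrt. unfold dot. nra. Qed.

Lemma vnorm_pos (p : pt) : p <> (0, 0) -> 0 < vnorm p.
Proof. intros H. apply sqrt_lt_R0, dot_self_pos, H. Qed.

Lemma cos_parallel_sq (p q : pt) : p <> (0, 0) -> q <> (0, 0) -> det p q = 0 ->
  dot p q / (vnorm p * vnorm q) * (dot p q / (vnorm p * vnorm q)) = 1.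
Proof.
  intros Hp Hq H.
  assert (Np := vnorm_pos p Hp). assert (Nq := vnorm_pos q Hq).
  assert (L := lagrange_identity p q). rewrite H, <- !vnorm_sq in L.
  field_simplify_eq; [lra | split; lra].
Qed.

(** [p], [A] and [q], [B] are the velocities and accelerations at the two
    points of an asymptotic pair; the fourth hypothesis is the derivative of
    [det p q = 0] along a branch of slope [t], the fifth is
    [kappa_f + kappa_g = 0]. *)
Lemma asymptotic_branch_slope (p q A B : pt) t :
  p <> (0, 0) -> q <> (0, 0) -> det p q = 0 -> det A q + t * det p B = 0 ->
  det p A / vnorm p ^ 3 + - (dot p q / (vnorm p * vnorm q)) * (det q B / vnorm q ^ 3) = 0 ->
  det q B <> 0 -> t * fst q = fst p /\ t * snd q = snd p.
Proof.
  intros Hp Hq H0 HE HD HB.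
  assert (Np := vnorm_pos p Hp). assert (Nq := vnorm_pos q Hq).
  assert (Ep := vnorm_sq p). assert (Eq := vnorm_sq q).
  set (d := dot p q) in *.
  assert (Hd : d <> 0).
  { intros E. assert (L := lagrange_identity p q). fold d in L. rewrite E, H0, <- Ep, <- Eq in L.
    assert (0 < vnorm p * vnorm p * (vnorm q * vnorm q)) by (repeat apply Rmult_lt_0_compat; lra).
    lra. }
  assert (I1 : det A q * dot p p = - det p A * d + det p q * dot A p)
    by (unfold d, det, dot; ring).
  assert (I2 : det p B * dot q q = det q B * d + det p q * dot B q)
    by (unfold d, det, dot; ring).
  rewrite H0, Rmult_0_l, Rplus_0_r in I1, I2.
  assert (Hpq : t * det q B * dot p p = det p A * dot q q).
  { apply (Rmult_eq_reg_r d); auto.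
    replace (t * det q B * dot p p * d) with (t * (det p B * dot q q) * dot p p) by (rewrite I2; ring).
    replace (det p A * dot q q * d) with (- (det A q * dot p p) * dot q q) by (rewrite I1; ring).
    replace (det A q) with (- (t * det p B)) by lra. ring. }
  assert (HA : det p A * (dot q q * dot q q) = d * dot p p * det q B).
  { assert (HD' : det p A * vnorm q ^ 4 = vnorm p ^ 2 * d * det q B)
      by (field_simplify_eq in HD; [split; lra | lra]).
    rewrite <- Ep, <- Eq. replace (vnorm q * vnorm q * (vnorm q * vnorm q)) with (vnorm q ^ 4) by ring.
    rewrite HD'. ring. }
  assert (Ht : t * dot q q = d).
  { apply (Rmult_eq_reg_r (det q B * dot p p * dot q q)).
    - transitivity (t * det q B * dot p p * (dot q q * dot q q)); [ring|].
      rewrite Hpq. transitivity (det p A * (dot q q * dot q q) * dot q q); [ring|].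
      rewrite HA. ring.
    - rewrite <- Ep, <- Eq. apply Rmult_integral_contrapositive; split;
        [apply Rmult_integral_contrapositive; split; [exact HB|] |];
        apply Rgt_not_eq, Rmult_lt_0_compat; lra. }
  assert (Hqq : dot q q <> 0) by (rewrite <- Eq; nra).
  unfold d, dot, det in *. destruct p as [p1 p2], q as [q1 q2]. simpl in *.
  split; apply (Rmult_eq_reg_r (q1 * q1 + q2 * q2)); auto.
  - transitivity ((t * (q1 * q1 + q2 * q2)) * q1); [ring|]. rewrite Ht.
    transitivity (p1 * (q1 * q1 + q2 * q2) - q2 * (p1 * q2 - p2 * q1)); [ring|]. rewrite H0. ring.
  - transitivity ((t * (q1 * q1 + q2 * q2)) * q2); [ring|]. rewrite Ht.
    transitivity (p2 * (q1 * q1 + q2 * q2) + q1 * (p1 * q2 - p2 * q1)); [ring|]. rewrite H0. ring.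
Qed.

Lemma det_parallel_neq0 (p q B : pt) : p <> (0, 0) -> q <> (0, 0) -> det p q = 0 ->
  det q B <> 0 -> det p B <> 0.
Proof.
  intros Hp Hq H0 HB E.
  assert (L := lagrange_identity p q). rewrite H0 in L.
  assert (Hpq : 0 < dot p p * dot q q) by (apply Rmult_lt_0_compat; apply dot_self_pos; auto).
  assert (I : det p B * dot q q = det q B * dot p q + det p q * dot B q) by (unfold det, dot; ring).
  rewrite E, H0 in I.
  assert (Hd : dot p q = 0).
  { assert (Hm : det q B * dot p q = 0) by lra.
    apply Rmult_integral in Hm as [Hm|Hm]; [contradiction | exact Hm]. }
  rewrite Hd in L. lra.
Qed.

Definition xcoord (f : curve) s := fst (f s).
Definition ycoord (f : curve) s := snd (f s).
Definition xvel f := Derive (xcoord f).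
Definition yvel f := Derive (ycoord f).
Definition xacc f := Derive (xvel f).
Definition yacc f := Derive (yvel f).
Definition speed f s := vnorm (d1 f s).

Lemma det_d1_eq f u v : det (d1 f u) (d1 f v) = xvel f u * yvel f v - yvel f u * xvel f v.
Proof. reflexivity. Qed.

Lemma curvature_eq f s :
  curvature f s = (xvel f s * yacc f s - yvel f s * xacc f s) / speed f s ^ 3.
Proof. reflexivity. Qed.

Definition tcos f u v := dot (d1 f u) (d1 f v) / (speed f u * speed f v).

Lemma kappa_g_tcos f u v : kappa_g f u v = - tcos f u v * curvature f v.
Proof. reflexivity. Qed.

Lemma kappa_g_eq f u v : kappa_g f u v =
  - ((xvel f u * xvel f v + yvel f u * yvel f v) / (speed f u * speed f v)) * curvature f v.
Proof. reflexivity. Qed.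

Lemma tcos_sym f u v : tcos f u v = tcos f v u.
Proof. unfold tcos, dot. f_equal; ring. Qed.

Section SmoothCurve.
Variable f : curve.
Hypothesis Hsm : smooth_curve f.

Lemma smooth_xcoord : smooth (xcoord f).
Proof. apply smooth_on_of_ex_derive_n. intros n x _. apply Hsm. Qed.
Lemma smooth_ycoord : smooth (ycoord f).
Proof. apply smooth_on_of_ex_derive_n. intros n x _. apply Hsm. Qed.
Lemma smooth_xvel : smooth (xvel f). Proof. apply smooth_on_Derive, smooth_xcoord. Qed.
Lemma smooth_yvel : smooth (yvel f). Proof. apply smooth_on_Derive, smooth_ycoord. Qed.
Lemma smooth_xacc : smooth (xacc f). Proof. apply smooth_on_Derive, smooth_xvel. Qed.
Lemma smooth_yacc : smooth (yacc f). Proof. apply smooth_on_Derive, smooth_yvel. Qed.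

Lemma is_derive_xcoord x : is_derive (xcoord f) x (xvel f x).
Proof. apply smooth_is_derive, smooth_xcoord. Qed.
Lemma is_derive_ycoord x : is_derive (ycoord f) x (yvel f x).
Proof. apply smooth_is_derive, smooth_ycoord. Qed.
Lemma is_derive_xvel x : is_derive (xvel f) x (xacc f x).
Proof. apply smooth_is_derive, smooth_xvel. Qed.
Lemma is_derive_yvel x : is_derive (yvel f) x (yacc f x).
Proof. apply smooth_is_derive, smooth_yvel. Qed.

Hypothesis Hreg : regular f.

Lemma vel_sq_pos s : 0 < xvel f s * xvel f s + yvel f s * yvel f s.
Proof. apply (dot_self_pos (d1 f s)), Hreg. Qed.

Lemma speed_pos s : 0 < speed f s.
Proof. apply vnorm_pos, Hreg. Qed.

Lemma speed_neq0 s : speed f s <> 0.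
Proof. apply Rgt_not_eq, speed_pos. Qed.

Lemma smooth_speed : smooth (speed f).
Proof.
  intros n.
  change (Cn_on n (fun _ => True) (fun s => sqrt (xvel f s * xvel f s + yvel f s * yvel f s))).
  apply Cn_on_sqrt; [apply open_whole_line | intros; apply vel_sq_pos |].
  pose proof (smooth_xvel n). pose proof (smooth_yvel n).
  solve_Cn_on open_whole_line.
Qed.

Lemma smooth_curvature : smooth (curvature f).
Proof.
  intros n. apply (Cn_on_ext _ open_whole_line n
    (fun s => (xvel f s * yacc f s - yvel f s * xacc f s) / speed f s ^ 3)); [reflexivity|].
  pose proof (smooth_xvel n). pose proof (smooth_yvel n). pose proof (smooth_xacc n).
  pose proof (smooth_yacc n). pose proof (smooth_speed n).
  solve_Cn_on open_whole_line. intros; apply pow_nonzero, speed_neq0.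
Qed.

Lemma tcos_sq u v : det (d1 f u) (d1 f v) = 0 -> tcos f u v * tcos f u v = 1.
Proof. apply cos_parallel_sq; apply Hreg. Qed.

End SmoothCurve.

Section Generic.
Variable f : curve.
Hypothesis Hg : generic f.

Lemma generic_closed : closed_curve f.
Proof. apply Hg. Qed.
Lemma generic_smooth : smooth_curve f.
Proof. apply Hg. Qed.
Lemma generic_regular : regular f.
Proof. apply Hg. Qed.
Lemma generic_transversal : transversal_self_crossings f.
Proof. apply Hg. Qed.
Lemma generic_inflexions : nondegenerate_inflexions f.
Proof. apply Hg. Qed.
Lemma generic_parallel_inflexions u v :
  parallel_pair f u v -> ~ inflexion f u \/ ~ inflexion f v.
Proof. apply Hg. Qed.
Lemma generic_no_double_asymptotes : no_double_asymptotes f.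
Proof. apply Hg. Qed.
Lemma generic_asymptotes : asymptotes_nondegenerate f.
Proof. apply Hg. Qed.

Lemma asymptotic_pair_curvatures_neq0 u v : asymptotic_pair f u v ->
  curvature f u <> 0 /\ curvature f v <> 0.
Proof.
  intros [Hpp HD].
  assert (S := tcos_sq f generic_regular u v (proj2 Hpp)).
  unfold css_denom in HD. rewrite kappa_g_tcos in HD.
  destruct (generic_parallel_inflexions u v Hpp) as [H|H]; unfold inflexion in H.
  - split; auto. intro E. rewrite E in HD. apply H. nra.
  - split; auto. intro E. apply H. nra.
Qed.

End Generic.

Section Periodicity.
Variable f : curve.
Hypothesis Hcl : closed_curve f.

Lemma curve_shift_nat n s : f (s + INR n) = f s.
Proof.
  induction n as [|n IH]; [simpl; rewrite Rplus_0_r; auto|].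
  rewrite S_INR. replace (s + (INR n + 1)) with ((s + INR n) + 1) by ring.
  rewrite (proj2 Hcl). auto.
Qed.

Lemma curve_shift k s : f (s + IZR k) = f s.
Proof.
  destruct (Z_le_gt_dec 0 k) as [h|h].
  - destruct (Z_of_nat_complete k h) as [n ->]. rewrite <- INR_IZR_INZ. apply curve_shift_nat.
  - destruct (Z_of_nat_complete (- k) ltac:(lia)) as [n Hn].
    replace k with (- Z.of_nat n)%Z by lia. rewrite opp_IZR, <- INR_IZR_INZ.
    rewrite <- (curve_shift_nat n (s + - INR n)). f_equal. ring.
Qed.

Let Hsm := proj1 Hcl.

Lemma xvel_shift k s : xvel f (s + IZR k) = xvel f s.
Proof.
  apply Derive_periodic; [intros; unfold xcoord; rewrite curve_shift; auto|].
  apply smooth_ex_derive, smooth_xcoord, Hsm.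
Qed.
Lemma yvel_shift k s : yvel f (s + IZR k) = yvel f s.
Proof.
  apply Derive_periodic; [intros; unfold ycoord; rewrite curve_shift; auto|].
  apply smooth_ex_derive, smooth_ycoord, Hsm.
Qed.
Lemma xacc_shift k s : xacc f (s + IZR k) = xacc f s.
Proof.
  apply Derive_periodic; [intros; apply xvel_shift|].
  apply smooth_ex_derive, smooth_xvel, Hsm.
Qed.
Lemma yacc_shift k s : yacc f (s + IZR k) = yacc f s.
Proof.
  apply Derive_periodic; [intros; apply yvel_shift|].
  apply smooth_ex_derive, smooth_yvel, Hsm.
Qed.

Lemma d1_shift k s : d1 f (s + IZR k) = d1 f s.
Proof. change ((xvel f (s + IZR k), yvel f (s + IZR k)) = (xvel f s, yvel f s)). rewrite xvel_shift, yvel_shift. auto. Qed.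

Lemma curvature_shift k s : curvature f (s + IZR k) = curvature f s.
Proof.
  unfold curvature. rewrite d1_shift. f_equal. f_equal.
  change ((xacc f (s + IZR k), yacc f (s + IZR k)) = (xacc f s, yacc f s)). rewrite xacc_shift, yacc_shift. auto.
Qed.

Lemma kappa_g_shift k m u v : kappa_g f (u + IZR k) (v + IZR m) = kappa_g f u v.
Proof. unfold kappa_g. rewrite !d1_shift, curvature_shift. auto. Qed.

Lemma css_denom_shift k m u v : css_denom f (u + IZR k) (v + IZR m) = css_denom f u v.
Proof. unfold css_denom. rewrite kappa_g_shift, curvature_shift. auto. Qed.

Lemma css_point_shift k m u v : css_point f (u + IZR k) (v + IZR m) = css_point f u v.
Proof. unfold css_point. rewrite css_denom_shift, kappa_g_shift, curvature_shift, !curve_shift. auto. Qed.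

Lemma parallel_pair_shift k m u v : parallel_pair f (u + IZR k) (v + IZR m) <-> parallel_pair f u v.
Proof. unfold parallel_pair. rewrite !curve_shift, !d1_shift. tauto. Qed.

End Periodicity.

Lemma parallel_pair_sym f u v : parallel_pair f u v -> parallel_pair f v u.
Proof. unfold parallel_pair. rewrite !det_d1_eq. intros [H1 H2]. split; auto. lra. Qed.

Section Symmetry.
Variable f : curve.
Hypothesis Hreg : regular f.
Variables u v : R.
Hypothesis Hdet : det (d1 f u) (d1 f v) = 0.

Lemma css_denom_sym : css_denom f v u = - tcos f u v * css_denom f u v.
Proof.
  assert (S := tcos_sq f Hreg u v Hdet).
  unfold css_denom. rewrite !kappa_g_tcos, (tcos_sym f v u).
  transitivity (- tcos f u v * curvature f u + (tcos f u v * tcos f u v) * curvature f v); [|ring].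
  rewrite S. ring.
Qed.

Lemma css_point_sym : css_denom f u v <> 0 -> css_point f v u = css_point f u v.
Proof.
  intros HD. assert (S := tcos_sq f Hreg u v Hdet).
  assert (Hs : tcos f u v <> 0) by (intro E; rewrite E in S; lra).
  unfold css_point. rewrite css_denom_sym.
  unfold css_denom in *. rewrite !kappa_g_tcos in *. rewrite (tcos_sym f v u).
  unfold pscal, padd; simpl. f_equal;
    field_simplify_eq; auto; replace (tcos f u v ^ 2) with (tcos f u v * tcos f u v) by ring;
    rewrite S; ring.
Qed.

End Symmetry.

Lemma exists_between_right a r t : 0 < r -> a < t -> exists s, a < s < a + r /\ s < t.
Proof.
  intros Hr Ht. exists (a + Rmin r (t - a) / 2).
  assert (0 < Rmin r (t - a)) by (apply Rmin_pos; lra).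
  assert (Rmin r (t - a) <= r) by apply Rmin_l.
  assert (Rmin r (t - a) <= t - a) by apply Rmin_r.
  lra.
Qed.

(** An arc [s |-> (X s, Y s)] of constant turning, escaping to infinity
    along the line [Y = 0] as [s -> a+]. *)
Section ConvexArc.
Variables X Y dX dY ddX ddY : R -> R.
Variables a r ex ek : R.
Hypothesis Hek : ek * ek = 1.
Let J s := a < s < a + r.
Hypothesis HdX : forall s, J s -> is_derive X s (dX s).
Hypothesis HdY : forall s, J s -> is_derive Y s (dY s).
Hypothesis HddY : forall s, J s -> is_derive dY s (ddY s).
Hypothesis HddX : forall s, J s -> is_derive dX s (ddX s).
Hypothesis HX_mono : forall s, J s -> 0 < ex * dX s.
Hypothesis Hturn : forall s, J s -> 0 < ek * (dX s * ddY s - dY s * ddX s).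
Hypothesis HY_lim : forall eps, 0 < eps ->
  exists rho, 0 < rho /\ forall s, a < s < a + rho -> Rabs (Y s) < eps.
Hypothesis HX_lim : forall M, exists rho, 0 < rho /\ forall s, a < s < a + rho -> M < Rabs (X s).

Let slope s := dY s / dX s.

Lemma dX_neq0 s : J s -> dX s <> 0.
Proof. intros H E. generalize (HX_mono s H). rewrite E. lra. Qed.

Lemma slope_strict_mono s t : J s -> J t -> s < t -> ek * slope s < ek * slope t.
Proof.
  intros Hs Ht Hst.
  destruct (MVT_cor2 slope (fun z => (ddY z * dX z - dY z * ddX z) / dX z ^ 2) s t Hst)
    as [c [Hc1 Hc2]].
  - intros c Hc. apply is_derive_Reals, is_derive_div; [apply HddY | apply HddX | apply dX_neq0];
      unfold J in *; lra.
  - assert (Jc : J c) by (unfold J in *; lra).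
    assert (Hn := dX_neq0 c Jc).
    assert (P : 0 < ek * ((ddY c * dX c - dY c * ddX c) / dX c ^ 2)).
    { replace (ek * ((ddY c * dX c - dY c * ddX c) / dX c ^ 2))
        with (ek * (dX c * ddY c - dY c * ddX c) / (dX c ^ 2)) by (field; auto).
      apply Rdiv_lt_0_compat; [apply Hturn; auto | apply pow2_gt_0; auto]. }
    assert (0 < ek * ((ddY c * dX c - dY c * ddX c) / dX c ^ 2) * (t - s))
      by (apply Rmult_lt_0_compat; lra).
    enough (ek * (slope t - slope s) = ek * ((ddY c * dX c - dY c * ddX c) / dX c ^ 2) * (t - s))
      by lra.
    rewrite Hc1; ring.
Qed.

Lemma X_strict_mono s t : J s -> J t -> s < t -> 0 < ex * (X t - X s).
Proof.
  intros Hs Ht Hst.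
  destruct (MVT_cor2 X dX s t Hst) as [c [Hc1 Hc2]].
  - intros c Hc. apply is_derive_Reals, HdX. unfold J in *; lra.
  - rewrite Hc1. assert (Jc : J c) by (unfold J in *; lra).
    assert (H := HX_mono c Jc).
    replace (ex * (dX c * (t - s))) with ((ex * dX c) * (t - s)) by ring.
    apply Rmult_lt_0_compat; lra.
Qed.

Lemma cauchy_slope s t : J s -> J t -> s < t ->
  exists xi, s < xi < t /\ Y t - Y s = slope xi * (X t - X s).
Proof.
  intros Hs Ht Hst.
  set (H := fun z => Y z * (X t - X s) - X z * (Y t - Y s)).
  destruct (MVT_cor2 H (fun z => dY z * (X t - X s) - dX z * (Y t - Y s)) s t Hst)
    as [c [Hc1 Hc2]].
  - intros c Hc. apply is_derive_Reals. unfold H. assert (Jc : J c) by (unfold J in *; lra).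
    eapply is_derive_eq.
    + apply is_derive_minus_R; apply is_derive_mult_R;
        [apply HdY; auto | apply is_derive_const_R | apply HdX; auto | apply is_derive_const_R].
    + cbv beta. ring.
  - exists c. split; auto. assert (Jc : J c) by (unfold J in *; lra).
    assert (Hn := dX_neq0 c Jc).
    replace (H t - H s) with 0 in Hc1 by (unfold H; ring).
    assert (E : dY c * (X t - X s) - dX c * (Y t - Y s) = 0) by nra.
    unfold slope. apply (Rmult_eq_reg_l (dX c)); auto.
    replace (dX c * (dY c / dX c * (X t - X s))) with (dY c * (X t - X s)) by (field; auto). lra.
Qed.

(** If the slope had the wrong sign at [t], it would stay bounded away from
    0 on [(a, t)], and [Y] would inherit the blow-up of [X]. *)
Lemma slope_nonneg t : J t -> 0 <= ek * slope t.
Proof.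
  intros Ht. destruct (Rle_or_lt 0 (ek * slope t)) as [h|h]; auto. exfalso.
  set (c := - (ek * slope t)).
  assert (Hc : 0 < c) by (unfold c; lra).
  destruct (HY_lim 1) as [r1 [Hr1 H1]]; [lra|].
  destruct (HX_lim (Rabs (X t) + (Rabs (Y t) + 1) / c)) as [r2 [Hr2 H2]].
  destruct (exists_between_right a (Rmin (Rmin r1 r2) r) t) as [s [Hs Hst]].
  { repeat apply Rmin_pos; unfold J in *; lra. }
  { unfold J in *; lra. }
  assert (Hm1 := Rmin_l (Rmin r1 r2) r). assert (Hm2 := Rmin_r (Rmin r1 r2) r).
  assert (Hm3 := Rmin_l r1 r2). assert (Hm4 := Rmin_r r1 r2).
  assert (Js : J s) by (unfold J in *; lra).
  specialize (H1 s ltac:(lra)). specialize (H2 s ltac:(lra)).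
  destruct (cauchy_slope s t Js Ht Hst) as [xi [Hxi E]].
  assert (Jxi : J xi) by (unfold J in *; lra).
  assert (Hp := slope_strict_mono xi t Jxi Ht (proj2 Hxi)).
  assert (Hslope : c < Rabs (slope xi)).
  { rewrite <- (Rabs_mult_unit ek (slope xi) Hek). rewrite Rabs_left; unfold c; lra. }
  assert (HdXa : (Rabs (Y t) + 1) / c < Rabs (X t - X s)).
  { assert (Rabs (X s) <= Rabs (X t) + Rabs (X t - X s)).
    { replace (X s) with (X t - (X t - X s)) at 1 by ring.
      eapply Rle_trans; [apply Rabs_triang|]. rewrite Rabs_Ropp. lra. }
    lra. }
  assert (Hprod : Rabs (Y t) + 1 < Rabs (slope xi) * Rabs (X t - X s)).
  { replace (Rabs (Y t) + 1) with (c * ((Rabs (Y t) + 1) / c)) by (field; lra).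
    apply Rmult_le_0_lt_compat; try lra.
    apply Rlt_le, Rdiv_lt_0_compat; [generalize (Rabs_pos (Y t)); lra | lra]. }
  rewrite <- Rabs_mult, <- E in Hprod.
  assert (Rabs (Y t - Y s) <= Rabs (Y t) + Rabs (Y s)).
  { unfold Rminus. eapply Rle_trans; [apply Rabs_triang|]. rewrite Rabs_Ropp. lra. }
  lra.
Qed.

Lemma Y_strict_mono s t : J s -> J t -> s < t -> ex * ek * Y s < ex * ek * Y t.
Proof.
  intros Hs Ht Hst.
  destruct (cauchy_slope s t Hs Ht Hst) as [xi [Hxi E]].
  assert (Jxi : J xi) by (unfold J in *; lra).
  assert (P1 : 0 < ek * slope xi).
  { assert (Hp := slope_strict_mono s xi Hs Jxi (proj1 Hxi)). assert (Hn := slope_nonneg s Hs). lra. }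
  assert (P2 := X_strict_mono s t Hs Ht Hst).
  assert (0 < (ek * slope xi) * (ex * (X t - X s))) by (apply Rmult_lt_0_compat; auto).
  enough (ex * ek * (Y t - Y s) = (ek * slope xi) * (ex * (X t - X s))) by lra.
  rewrite E; ring.
Qed.

Hypothesis Hex : ex * ex = 1.

Lemma convex_arc_one_side t : J t -> 0 < ex * ek * Y t.
Proof.
  intros Ht.
  assert (Hnonneg : forall t, J t -> 0 <= ex * ek * Y t).
  { intros t' Ht'. destruct (Rle_or_lt 0 (ex * ek * Y t')) as [h|h]; auto. exfalso.
    destruct (HY_lim (- (ex * ek * Y t'))) as [r1 [Hr1 H1]]; [lra|].
    destruct (exists_between_right a (Rmin r1 r) t') as [s [Hs Hst]].
    { apply Rmin_pos; unfold J in *; lra. }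
    { unfold J in *; lra. }
    assert (Hm1 := Rmin_l r1 r). assert (Hm2 := Rmin_r r1 r).
    assert (Js : J s) by (unfold J in *; lra).
    specialize (H1 s ltac:(lra)).
    assert (Hmono := Y_strict_mono s t' Js Ht' Hst).
    assert (Habs : Rabs (ex * ek * Y s) = Rabs (Y s)).
    { apply Rabs_mult_unit. transitivity ((ex * ex) * (ek * ek)); [ring|]. rewrite Hex, Hek; ring. }
    assert (H3 := Rabs_maj2 (ex * ek * Y s)). lra. }
  set (s := (a + t) / 2).
  assert (Js : J s) by (unfold J in *; unfold s; lra).
  assert (Hst : s < t) by (unfold J in *; unfold s; lra).
  assert (A := Y_strict_mono s t Js Ht Hst). assert (B := Hnonneg s Js). lra.
Qed.

End ConvexArc.

Lemma is_lim_seq_epsilon u (l : R) : is_lim_seq u l ->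
  forall eps, 0 < eps -> exists N, forall n, (N <= n)%nat -> Rabs (u n - l) < eps.
Proof.
  intros H eps He. apply is_lim_seq_spec in H. destruct (H (mkposreal eps He)) as [N HN].
  exists N. intros n Hn. apply HN, Hn.
Qed.

Lemma is_lim_seq_of_epsilon u (l : R) :
  (forall eps, 0 < eps -> exists N, forall n, (N <= n)%nat -> Rabs (u n - l) < eps) -> is_lim_seq u l.
Proof.
  intros H. apply is_lim_seq_spec. intros eps. destruct (H eps (cond_pos eps)) as [N HN].
  exists N. intros n Hn. apply HN, Hn.
Qed.

Lemma is_lim_seq_opp_R u (a : R) : is_lim_seq u a -> is_lim_seq (fun n => - u n) (- a).
Proof. apply (is_lim_seq_opp u a). Qed.

Lemma is_lim_seq_continuous_R (g : R -> R) u (a : R) :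
  continuous g a -> is_lim_seq u a -> is_lim_seq (fun n => g (u n)) (g a).
Proof. intros Hg. apply is_lim_seq_continuous, continuity_pt_filterlim, Hg. Qed.

Lemma is_lim_seq_unique_R u (a b : R) : is_lim_seq u a -> is_lim_seq u b -> a = b.
Proof.
  intros H1 H2. apply is_lim_seq_unique in H1. apply is_lim_seq_unique in H2.
  rewrite H1 in H2. injection H2; auto.
Qed.

Lemma is_lim_seq_eq_R u (a b : R) : is_lim_seq u a -> a = b -> is_lim_seq u b.
Proof. intros H <-; exact H. Qed.

Lemma is_lim_seq_eventually_bounded u (a : R) : is_lim_seq u a ->
  exists N, forall n, (N <= n)%nat -> Rabs (u n) <= Rabs a + 1.
Proof.
  intros H. destruct (is_lim_seq_epsilon u a H 1) as [N HN]; [lra|]. exists N. intros n Hn.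
  specialize (HN n Hn). replace (u n) with ((u n - a) + a) by ring.
  eapply Rle_trans; [apply Rabs_triang | lra].
Qed.

Lemma not_eventually_bounded (a : nat -> R) : (forall k, INR k < Rabs (a k)) ->
  ~ (exists B N, forall k, (N <= k)%nat -> Rabs (a k) <= B).
Proof.
  intros H [B [N HB]].
  destruct (INR_unbounded (Rabs B)) as [k Hk].
  specialize (H (max N k)). specialize (HB (max N k) ltac:(lia)).
  assert (INR k <= INR (max N k)) by (apply le_INR; lia).
  generalize (Rle_abs B). lra.
Qed.

Lemma is_lim_seq_subseq_ge u (a : R) (phi : nat -> nat) :
  (forall k, (k <= phi k)%nat) -> is_lim_seq u a -> is_lim_seq (fun k => u (phi k)) a.
Proof.
  intros Hphi H. apply is_lim_seq_of_epsilon. intros eps He.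
  destruct (is_lim_seq_epsilon u a H eps He) as [N HN].
  exists N. intros n Hn. apply HN. specialize (Hphi n). lia.
Qed.

Lemma strict_mono_ge (phi : nat -> nat) : (forall k, (phi k < phi (S k))%nat) -> forall k, (k <= phi k)%nat.
Proof. intros H k. induction k; [lia|]. specialize (H k). lia. Qed.

(** [phi k] is chosen beyond [phi (k - 1)] within [1 / (k + 1)] of a
    cluster point of [u]. *)
Lemma bolzano_weierstrass_subseq (u : nat -> R) a b : (forall n, a <= u n <= b) ->
  exists phi : nat -> nat, (forall k, (phi k < phi (S k))%nat) /\
    exists l : R, is_lim_seq (fun k => u (phi k)) l.
Proof.
  intros Hab.
  destruct (Bolzano_Weierstrass u (fun c => a <= c <= b) (compact_P3 a b) Hab) as [l Hl].
  assert (Hl' : forall (k N : nat), exists p, (N <= p)%nat /\ Rabs (u p - l) < / INR (S k)).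
  { intros k N. destruct (Hl (fun y => Rabs (y - l) < / INR (S k)) N) as [p [Hp1 Hp2]].
    - assert (Hpos : 0 < / INR (S k)) by (apply Rinv_0_lt_compat, lt_0_INR; lia).
      exists (mkposreal _ Hpos). intros y Hy. exact Hy.
    - exists p; auto. }
  set (g := fun k N => proj1_sig (constructive_indefinite_description _ (Hl' k N))).
  assert (Hg : forall k N, (N <= g k N)%nat /\ Rabs (u (g k N) - l) < / INR (S k)).
  { intros k N. apply (proj2_sig (constructive_indefinite_description _ (Hl' k N))). }
  set (phi := fix phi k := match k with O => g O O | S k' => g (S k') (S (phi k')) end).
  assert (Hphi : forall k, (phi k < phi (S k))%nat).
  { intros k. simpl. destruct (Hg (S k) (S (phi k))). lia. }
  assert (Hclose : forall k, Rabs (u (phi k) - l) < / INR (S k)) by (intros [|k]; simpl; apply Hg).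
  exists phi. split; auto. exists l.
  apply is_lim_seq_of_epsilon. intros eps He.
  destruct (archimed_cor1 eps He) as [N [HN1 HN2]].
  exists N. intros n Hn. eapply Rlt_trans; [apply Hclose|].
  eapply Rle_lt_trans; [|exact HN1].
  apply Rinv_le_contravar; [apply lt_0_INR; lia | apply le_INR; lia].
Qed.

Lemma bolzano_weierstrass_subseq2 (u v : nat -> R) a b :
  (forall n, a <= u n <= b /\ a <= v n <= b) ->
  exists phi : nat -> nat, (forall k, (k <= phi k)%nat) /\ exists l1 l2 : R,
    is_lim_seq (fun k => u (phi k)) l1 /\ is_lim_seq (fun k => v (phi k)) l2.
Proof.
  intros H.
  destruct (bolzano_weierstrass_subseq u a b) as [p1 [Hp1 [l1 L1]]]; [intros; apply H|].
  destruct (bolzano_weierstrass_subseq (fun k => v (p1 k)) a b) as [p2 [Hp2 [l2 L2]]]; [intros; apply H|].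
  exists (fun k => p1 (p2 k)). split.
  - intros k. assert (A := strict_mono_ge p2 Hp2 k). assert (B := strict_mono_ge p1 Hp1 (p2 k)). lia.
  - exists l1, l2. split; auto.
    apply (is_lim_seq_subseq_ge (fun k => u (p1 k)) l1 p2); auto. apply strict_mono_ge; auto.
Qed.

Lemma psub_neq0 (a b : pt) : a <> b -> psub b a <> (0, 0).
Proof.
  destruct a as [a1 a2], b as [b1 b2]. unfold psub; simpl. intros H E. injection E. intros.
  apply H. f_equal; lra.
Qed.

(** Points escaping to infinity along the line [a b] while approaching both
    [a b] and [a' b'] force the two lines to coincide. *)
Lemma far_points_same_line (a b a' b' : pt) (x : nat -> pt) : a <> b ->
  is_lim_seq (fun k => det (psub b a) (psub (x k) a)) 0 ->
  is_lim_seq (fun k => det (psub b' a') (psub (x k) a')) 0 ->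
  (forall k, INR k < Rabs (dot (psub (x k) a) (psub b a))) ->
  det (psub b' a') (psub b a) = 0 /\ det (psub b' a') (psub a' a) = 0.
Proof.
  intros Hab LD LF HE.
  set (w := psub b a) in *. set (w' := psub b' a').
  assert (Hw := dot_self_pos w (psub_neq0 a b Hab)).
  set (Dk := fun k => det w (psub (x k) a)).
  set (Ek := fun k => dot (psub (x k) a) w).
  set (Fk := fun k => det w' (psub (x k) a)).
  assert (LF' : is_lim_seq Fk (det w' (psub a' a))).
  { apply (is_lim_seq_ext (fun k => det w' (psub (x k) a') + det w' (psub a' a))).
    - intros k. unfold Fk, det, psub. simpl. ring.
    - eapply is_lim_seq_eq_R; [apply is_lim_seq_plus'; [exact LF | apply is_lim_seq_const] | ring]. }
  assert (Id : forall k, Fk k * dot w w = det w' w * Ek k + dot w' w * Dk k).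
  { intros k. unfold Fk, Ek, Dk, det, dot, psub. simpl. ring. }
  assert (H1 : det w' w = 0).
  { destruct (Req_dec (det w' w) 0) as [h|h]; auto. exfalso.
    assert (L2 : is_lim_seq (fun k => det w' w * Ek k) (det w' (psub a' a) * dot w w - dot w' w * 0)).
    { apply (is_lim_seq_ext (fun k => Fk k * dot w w - dot w' w * Dk k)); [intros k; rewrite Id; ring|].
      apply is_lim_seq_minus'; apply is_lim_seq_mult'; auto using is_lim_seq_const. }
    destruct (is_lim_seq_eventually_bounded _ _ L2) as [N HN].
    assert (Hd : 0 < Rabs (det w' w)) by (apply Rabs_pos_lt; auto).
    apply (not_eventually_bounded Ek HE).
    exists ((Rabs (det w' (psub a' a) * dot w w - dot w' w * 0) + 1) / Rabs (det w' w)), N.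
    intros k Hk. specialize (HN k Hk). rewrite Rabs_mult in HN.
    apply (Rmult_le_reg_l (Rabs (det w' w))); auto.
    replace (Rabs (det w' w) * ((Rabs (det w' (psub a' a) * dot w w - dot w' w * 0) + 1) / Rabs (det w' w)))
      with (Rabs (det w' (psub a' a) * dot w w - dot w' w * 0) + 1) by (field; lra).
    exact HN. }
  split; auto.
  assert (L3 : is_lim_seq (fun k => Fk k * dot w w) (dot w' w * 0)).
  { apply (is_lim_seq_ext (fun k => dot w' w * Dk k)); [intros k; rewrite Id, H1; ring|].
    apply is_lim_seq_mult'; [apply is_lim_seq_const | exact LD]. }
  assert (L4 : is_lim_seq (fun k => Fk k * dot w w) (det w' (psub a' a) * dot w w))
    by (apply is_lim_seq_mult'; [exact LF' | apply is_lim_seq_const]).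
  assert (E := is_lim_seq_unique_R _ _ _ L3 L4).
  rewrite Rmult_0_r in E. symmetry in E. apply Rmult_integral in E as [E|E]; auto. lra.
Qed.

Lemma same_line_of_det (a b a' b' : pt) : a <> b -> a' <> b' ->
  det (psub b' a') (psub b a) = 0 -> det (psub b' a') (psub a' a) = 0 -> same_line a' b' a b.
Proof.
  intros Hab Hab' H1 H2 z. unfold on_line.
  set (w := psub b a) in *. set (w' := psub b' a') in *.
  assert (Hw := dot_self_pos w (psub_neq0 a b Hab)).
  assert (Hw' := dot_self_pos w' (psub_neq0 a' b' Hab')).
  assert (Hdot : dot w' w <> 0).
  { intro E. assert (L := lagrange_identity w' w). rewrite E, H1 in L.
    assert (0 < dot w' w' * dot w w) by (apply Rmult_lt_0_compat; auto). lra. }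
  assert (E1 : det w' (psub z a') = det w' (psub z a) - det w' (psub a' a)) by (unfold det, psub; simpl; ring).
  rewrite H2, Rminus_0_r in E1.
  assert (Id : det w' (psub z a) * dot w w = det w' w * dot w (psub z a) + dot w' w * det w (psub z a))
    by (unfold det, dot, psub; simpl; ring).
  rewrite H1, Rmult_0_l, Rplus_0_l in Id.
  rewrite E1. split; intros H.
  - rewrite H, Rmult_0_l in Id. symmetry in Id. apply Rmult_integral in Id as [Id|Id]; auto. contradiction.
  - rewrite H, Rmult_0_r in Id. apply Rmult_integral in Id as [Id|Id]; auto. lra.
Qed.

(** * The branch of parallel pairs through an asymptotic pair *)

Section AsymptoticBranch.
Variable f : curve.
Hypothesis Hg : generic f.
Let Hsm := generic_smooth f Hg.
Let Hreg := generic_regular f Hg.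
Variables u0 v0 delta : R.
Variable tau : R -> R.
Hypothesis Has : asymptotic_pair f u0 v0.
Hypothesis Hbr : local_branch f u0 v0 delta tau.

Definition branch_dom s := u0 - delta < s < u0 + delta.

Lemma open_branch_dom : open branch_dom.
Proof. apply open_interval. Qed.

Lemma branch_dom_Rabs s : Rabs (s - u0) < delta <-> branch_dom s.
Proof. unfold branch_dom. split; intros H; [apply Rabs_def2 in H; lra | apply Rabs_def1; lra]. Qed.

Lemma branch_radius_pos : 0 < delta. Proof. apply Hbr. Qed.
Lemma branch_center : tau u0 = v0. Proof. apply Hbr. Qed.
Lemma branch_dom_center : branch_dom u0.
Proof. unfold branch_dom; generalize branch_radius_pos; lra. Qed.

Lemma branch_parallel s : branch_dom s -> parallel_pair f s (tau s).
Proof. intros H. apply Hbr, branch_dom_Rabs, H. Qed.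

Lemma smooth_branch : smooth_on branch_dom tau.
Proof. apply smooth_on_of_ex_derive_n. intros n x Hx. apply Hbr, branch_dom_Rabs, Hx. Qed.

Lemma smooth_on_comp_branch g : smooth g -> smooth_on branch_dom (fun s => g (tau s)).
Proof.
  intros H n. apply (Cn_on_comp n branch_dom (fun _ => True)); auto using smooth_branch.
  - apply open_branch_dom.
  - apply open_whole_line.
Qed.

Lemma is_derive_comp_branch (g dg : R -> R) s : branch_dom s -> (forall x, is_derive g x (dg x)) ->
  is_derive (fun y => g (tau y)) s (Derive tau s * dg (tau s)).
Proof.
  intros Hs Hd. apply (is_derive_comp g tau s (dg (tau s)) (Derive tau s)); [apply Hd|].
  apply Derive_correct, (smooth_on_ex_derive _ _ smooth_branch s Hs).
Qed.

Definition branch_denom s := css_denom f s (tau s).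
Definition branch_kappa_g s := kappa_g f s (tau s).

Lemma smooth_branch_kappa_g : smooth_on branch_dom branch_kappa_g.
Proof.
  intros n.
  pose proof (smooth_restrict branch_dom _ (smooth_xvel f Hsm) n).
  pose proof (smooth_restrict branch_dom _ (smooth_yvel f Hsm) n).
  pose proof (smooth_restrict branch_dom _ (smooth_speed f Hsm Hreg) n).
  pose proof (smooth_on_comp_branch _ (smooth_curvature f Hsm Hreg) n).
  pose proof (smooth_on_comp_branch _ (smooth_xvel f Hsm) n).
  pose proof (smooth_on_comp_branch _ (smooth_yvel f Hsm) n).
  pose proof (smooth_on_comp_branch _ (smooth_speed f Hsm Hreg) n).
  change (Cn_on n branch_dom (fun s => - ((xvel f s * xvel f (tau s) + yvel f s * yvel f (tau s)) /
     (speed f s * speed f (tau s))) * curvature f (tau s))).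
  solve_Cn_on open_branch_dom.
  intros x _. apply Rmult_integral_contrapositive. split; apply speed_neq0; auto.
Qed.

Lemma smooth_branch_denom : smooth_on branch_dom branch_denom.
Proof.
  intros n.
  pose proof (smooth_restrict branch_dom _ (smooth_curvature f Hsm Hreg) n).
  pose proof (smooth_branch_kappa_g n).
  change (Cn_on n branch_dom (fun s => curvature f s + branch_kappa_g s)).
  solve_Cn_on open_branch_dom.
Qed.

Lemma branch_denom_center : branch_denom u0 = 0.
Proof. unfold branch_denom. rewrite branch_center. apply Has. Qed.

Lemma is_derive_branch_denom s : branch_dom s -> is_derive branch_denom s (Derive branch_denom s).
Proof. intros H. apply Derive_correct, (smooth_on_ex_derive _ _ smooth_branch_denom s H). Qed.

(** Differentiate [det (f' s) (f' (tau s)) = 0] at [u0] and use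
    [kappa_f + kappa_g = 0]. *)
Definition branch_slope := Derive tau u0.

Lemma branch_slope_vel : branch_slope * xvel f v0 = xvel f u0 /\ branch_slope * yvel f v0 = yvel f u0.
Proof.
  set (Phi := fun s => xvel f s * yvel f (tau s) - yvel f s * xvel f (tau s)).
  assert (H0 : is_derive Phi u0 0).
  { apply (is_derive_ext_loc (fun _ => 0)); [|apply is_derive_const_R].
    apply (filter_imp branch_dom); [|apply open_branch_dom, branch_dom_center].
    intros y Hy. unfold Phi. destruct (branch_parallel y Hy) as [_ Hd]. rewrite det_d1_eq in Hd. lra. }
  assert (H1 : is_derive Phi u0
     ((xacc f u0 * yvel f v0 + xvel f u0 * (branch_slope * yacc f v0)) -
      (yacc f u0 * xvel f v0 + yvel f u0 * (branch_slope * xacc f v0)))).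
  { rewrite <- branch_center. unfold Phi.
    apply is_derive_minus_R.
    - apply (is_derive_mult_R (xvel f) (fun s => yvel f (tau s))); [apply (is_derive_xvel f Hsm)|].
      apply is_derive_comp_branch; [apply branch_dom_center | apply (is_derive_yvel f Hsm)].
    - apply (is_derive_mult_R (yvel f) (fun s => xvel f (tau s))); [apply (is_derive_yvel f Hsm)|].
      apply is_derive_comp_branch; [apply branch_dom_center | apply (is_derive_xvel f Hsm)]. }
  assert (E := is_derive_same_value _ _ _ _ H0 H1).
  destruct Has as [[_ Hdet] HD].
  destruct (asymptotic_pair_curvatures_neq0 f Hg u0 v0 Has) as [_ Hkv].
  apply (asymptotic_branch_slope (d1 f u0) (d1 f v0) (d2 f u0) (d2 f v0));
    [apply Hreg | apply Hreg | exact Hdet | | exact HD |].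
  - change (det (d2 f u0) (d1 f v0)) with (xacc f u0 * yvel f v0 - yacc f u0 * xvel f v0).
    change (det (d1 f u0) (d2 f v0)) with (xvel f u0 * yacc f v0 - yvel f u0 * xacc f v0).
    lra.
  - intros E'. apply Hkv. unfold curvature. rewrite E'. unfold Rdiv. ring.
Qed.

Definition chord := psub (f v0) (f u0).
Definition chord_det s := det chord (psub (f s) (f u0)).
Definition across_numer s := curvature f s * chord_det s + branch_kappa_g s * chord_det (tau s).

Lemma across_css_branch s : branch_denom s <> 0 ->
  across f u0 v0 (css_point f s (tau s)) = across_numer s / branch_denom s.
Proof.
  intros HD. unfold across, across_numer, chord_det, chord, css_point, det, psub, pscal, padd. simpl.
  unfold branch_denom, branch_kappa_g, css_denom in *. field. auto.
Qed.

Lemma is_derive_chord_det x : is_derive chord_det x (fst chord * yvel f x - snd chord * xvel f x).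
Proof.
  apply (is_derive_ext_R (fun s => fst chord * (ycoord f s - snd (f u0)) - snd chord * (xcoord f s - fst (f u0))));
    [reflexivity|].
  eapply is_derive_eq.
  - apply is_derive_minus_R; (apply is_derive_mult_R;
      [apply is_derive_const_R | apply is_derive_minus_R; [|apply is_derive_const_R]]).
    + apply (is_derive_ycoord f Hsm).
    + apply (is_derive_xcoord f Hsm).
  - cbv beta. ring.
Qed.

Lemma chord_det_center : chord_det u0 = 0.
Proof. unfold chord_det, det, psub. simpl. ring. Qed.

Lemma chord_det_partner : chord_det v0 = 0.
Proof. unfold chord_det, chord, det, psub. simpl. ring. Qed.

Lemma across_numer_center : across_numer u0 = 0.
Proof. unfold across_numer. rewrite branch_center, chord_det_center, chord_det_partner. ring. Qed.

(** The numerator of the [across] coordinate vanishes to second order at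
    [u0], while the denominator [branch_denom] vanishes only to first order. *)
Lemma across_numer_derive : is_derive across_numer u0 0.
Proof.
  assert (Hk := smooth_is_derive _ u0 (smooth_curvature f Hsm Hreg)).
  assert (Hkg : is_derive branch_kappa_g u0 (Derive branch_kappa_g u0)).
  { apply Derive_correct, (smooth_on_ex_derive _ _ smooth_branch_kappa_g), branch_dom_center. }
  assert (HE := is_derive_comp_branch _ _ u0 branch_dom_center is_derive_chord_det).
  unfold across_numer. eapply is_derive_eq.
  - apply is_derive_plus_R; apply is_derive_mult_R; eauto using is_derive_chord_det.
  - rewrite chord_det_center, branch_center, chord_det_partner.
    destruct branch_slope_vel as [E1 E2].
    destruct Has as [_ HD]. unfold css_denom in HD. unfold branch_kappa_g. rewrite branch_center.
    fold branch_slope.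
    transitivity (kappa_g f u0 v0 * (fst chord * (branch_slope * yvel f v0) - snd chord * (branch_slope * xvel f v0))
      + curvature f u0 * (fst chord * yvel f u0 - snd chord * xvel f u0)); [ring|].
    rewrite E1, E2. replace (kappa_g f u0 v0) with (- curvature f u0) by lra. ring.
Qed.

Lemma branch_unique : exists r, 0 < r /\ forall u v, Rabs (u - u0) < r -> Rabs (v - v0) < r ->
  det (d1 f u) (d1 f v) = 0 -> v = tau u.
Proof.
  assert (Hc0 : xvel f u0 * yacc f v0 - yvel f u0 * xacc f v0 <> 0).
  { destruct Has as [[_ Hdet] _].
    destruct (asymptotic_pair_curvatures_neq0 f Hg u0 v0 Has) as [_ Hkv].
    apply (det_parallel_neq0 (d1 f u0) (d1 f v0) (d2 f v0)); try apply Hreg; auto.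
    intros E. apply Hkv. unfold curvature. rewrite E. unfold Rdiv. ring. }
  destruct (det_sign_near (xvel f) (yvel f) (xacc f) (yacc f) u0 v0) as [r1 [Hr1 Hnear]];
    auto using smooth_continuous, smooth_xvel, smooth_yvel, smooth_xacc, smooth_yacc.
  destruct (continuous_eps_delta tau u0 (smooth_on_continuous _ _ smooth_branch u0 branch_dom_center) r1 Hr1)
    as [rt [Hrt Ct]].
  assert (Hdel := branch_radius_pos).
  exists (Rmin r1 (Rmin rt delta)). split; [repeat apply Rmin_pos; auto|].
  intros u v Hu Hv Hdet.
  assert (Hm1 := Rmin_l r1 (Rmin rt delta)). assert (Hm2 := Rmin_r r1 (Rmin rt delta)).
  assert (Hm3 := Rmin_l rt delta). assert (Hm4 := Rmin_r rt delta).
  assert (Htu : Rabs (tau u - v0) < r1) by (rewrite <- branch_center; apply Ct; lra).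
  apply Rabs_def2 in Htu. assert (Hv' := Hv). apply Rabs_def2 in Hv'.
  set (G := fun z => xvel f u * yvel f z - yvel f u * xvel f z).
  set (G' := fun z => xvel f u * yacc f z - yvel f u * xacc f z).
  symmetry. apply (derive_neq0_injective G G' (v0 - r1) (v0 + r1)); try lra.
  - intros z _. unfold G, G'. eapply is_derive_eq.
    + apply is_derive_minus_R; (apply is_derive_mult_R; [apply is_derive_const_R|]).
      * apply (is_derive_yvel f Hsm).
      * apply (is_derive_xvel f Hsm).
    + cbv beta. ring.
  - intros z Hz E. assert (P := Hnear u z ltac:(lra) ltac:(apply Rabs_def1; lra)).
    unfold G' in E. rewrite E, Rmult_0_l in P. lra.
  - unfold G. destruct (branch_parallel u ltac:(apply branch_dom_Rabs; lra)) as [_ Hd].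
    rewrite det_d1_eq in Hd, Hdet. lra.
Qed.

Hypothesis HDd : Derive branch_denom u0 <> 0.

Definition denom_slope := Derive branch_denom u0.

Lemma branch_denom_linear : exists r, 0 < r /\ forall s, Rabs (s - u0) < r ->
  Rabs (branch_denom s - denom_slope * (s - u0)) <= Rabs denom_slope / 2 * Rabs (s - u0).
Proof.
  assert (Hd : 0 < Rabs denom_slope) by (apply Rabs_pos_lt; auto).
  destruct (is_derive_first_order _ _ _ (is_derive_branch_denom u0 branch_dom_center) (Rabs denom_slope / 2))
    as [r [Hr H]]; [lra|].
  exists r. split; auto. intros s Hs. specialize (H s Hs).
  rewrite branch_denom_center, Rminus_0_r in H. exact H.
Qed.

Lemma across_branch_small eps : 0 < eps -> exists r, 0 < r /\ forall s, 0 < Rabs (s - u0) < r ->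
  branch_denom s <> 0 /\ Rabs (across f u0 v0 (css_point f s (tau s))) < eps.
Proof.
  intros He. set (d := denom_slope).
  assert (Hd : 0 < Rabs d) by (apply Rabs_pos_lt; auto).
  destruct branch_denom_linear as [r1 [Hr1 H1]].
  destruct (is_derive_first_order _ _ _ across_numer_derive (eps * Rabs d / 4)) as [r2 [Hr2 H2]].
  { assert (0 < eps * Rabs d) by (apply Rmult_lt_0_compat; lra). lra. }
  exists (Rmin r1 r2). split; [apply Rmin_pos; auto|].
  intros s [Hs0 Hs].
  specialize (H1 s (Rlt_le_trans _ _ _ Hs (Rmin_l _ _))).
  specialize (H2 s (Rlt_le_trans _ _ _ Hs (Rmin_r _ _))).
  rewrite across_numer_center, Rminus_0_r, Rmult_0_l, Rminus_0_r in H2. fold d in H1.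
  assert (Hlow : Rabs d / 2 * Rabs (s - u0) <= Rabs (branch_denom s)).
  { assert (Rabs (d * (s - u0)) <= Rabs (branch_denom s) + Rabs (branch_denom s - d * (s - u0))).
    { replace (d * (s - u0)) with (branch_denom s - (branch_denom s - d * (s - u0))) at 1 by ring.
      eapply Rle_trans; [apply Rabs_triang|]. rewrite Rabs_Ropp. lra. }
    rewrite Rabs_mult in H. lra. }
  assert (HDpos : 0 < Rabs (branch_denom s)).
  { assert (0 < Rabs d / 2 * Rabs (s - u0)) by (apply Rmult_lt_0_compat; lra). lra. }
  assert (HD : branch_denom s <> 0) by (intro E; rewrite E, Rabs_R0 in HDpos; lra).
  split; auto.
  rewrite across_css_branch; auto. unfold Rdiv. rewrite Rabs_mult, Rabs_inv.
  apply (Rmult_lt_reg_r (Rabs (branch_denom s))); auto.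
  rewrite Rmult_assoc, Rinv_l, Rmult_1_r; [|lra].
  assert (eps * Rabs d / 4 * Rabs (s - u0) < eps * (Rabs d / 2 * Rabs (s - u0))).
  { assert (0 < eps * Rabs d * Rabs (s - u0)) by (repeat apply Rmult_lt_0_compat; lra). nra. }
  assert (eps * (Rabs d / 2 * Rabs (s - u0)) <= eps * Rabs (branch_denom s)) by (apply Rmult_le_compat_l; lra).
  lra.
Qed.

Let w1 := fst chord.
Let w2 := snd chord.

Definition cssx s := fst (css_point f s (tau s)).
Definition cssy s := snd (css_point f s (tau s)).
Definition css_along s := along f u0 v0 (css_point f s (tau s)).
Definition css_across s := across f u0 v0 (css_point f s (tau s)).
Definition along_numer s :=
  curvature f s * along f u0 v0 (f s) + branch_kappa_g s * along f u0 v0 (f (tau s)).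
Definition chord_len2 := dot chord chord.

Lemma css_along_quotient s : branch_denom s <> 0 -> css_along s = along_numer s / branch_denom s.
Proof.
  intros H. unfold css_along, along_numer, along, css_point, dot, psub, pscal, padd. simpl.
  unfold branch_denom, branch_kappa_g, css_denom in *. field. auto.
Qed.

Lemma chord_len2_pos : 0 < chord_len2.
Proof. apply dot_self_pos, psub_neq0, Has. Qed.

Lemma along_numer_center : along_numer u0 = - curvature f u0 * chord_len2.
Proof.
  unfold along_numer, branch_kappa_g. rewrite branch_center.
  destruct Has as [_ HD]. unfold css_denom in HD.
  replace (kappa_g f u0 v0) with (- curvature f u0) by lra.
  unfold along, chord_len2, chord, dot, psub. simpl. ring.
Qed.

Lemma along_numer_center_neq0 : along_numer u0 <> 0.
Proof.
  rewrite along_numer_center. destruct (asymptotic_pair_curvatures_neq0 f Hg u0 v0 Has) as [H _].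
  assert (W := chord_len2_pos). intro E. apply Rmult_integral in E as [E|E]; lra.
Qed.

Lemma smooth_along_numer : smooth_on branch_dom along_numer.
Proof.
  intros n.
  pose proof (smooth_restrict branch_dom _ (smooth_curvature f Hsm Hreg) n).
  pose proof (smooth_restrict branch_dom _ (smooth_xcoord f Hsm) n).
  pose proof (smooth_restrict branch_dom _ (smooth_ycoord f Hsm) n).
  pose proof (smooth_on_comp_branch _ (smooth_xcoord f Hsm) n).
  pose proof (smooth_on_comp_branch _ (smooth_ycoord f Hsm) n).
  pose proof (smooth_branch_kappa_g n).
  change (Cn_on n branch_dom (fun s =>
    curvature f s * ((xcoord f s - fst (f u0)) * w1 + (ycoord f s - snd (f u0)) * w2)
    + branch_kappa_g s * ((xcoord f (tau s) - fst (f u0)) * w1 + (ycoord f (tau s) - snd (f u0)) * w2))).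
  solve_Cn_on open_branch_dom.
Qed.

Lemma smooth_css_on (V : R -> Prop) : open V -> (forall s, V s -> branch_dom s /\ branch_denom s <> 0) ->
  smooth_on V cssx /\ smooth_on V cssy.
Proof.
  intros HV Hsub.
  assert (Hres : forall g, smooth_on branch_dom g -> forall n, Cn_on n V g)
    by (intros g Hs n; apply (Cn_on_subset n branch_dom); [intros; apply Hsub; auto | apply Hs]).
  split; intros n;
    pose proof (Hres _ (smooth_restrict branch_dom _ (smooth_curvature f Hsm Hreg)) n);
    pose proof (Hres _ smooth_branch_kappa_g n);
    pose proof (Hres _ smooth_branch_denom n).
  - pose proof (Hres _ (smooth_restrict branch_dom _ (smooth_xcoord f Hsm)) n).
    pose proof (Hres _ (smooth_on_comp_branch _ (smooth_xcoord f Hsm)) n).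
    change (Cn_on n V (fun s => / branch_denom s * (curvature f s * xcoord f s + branch_kappa_g s * xcoord f (tau s)))).
    solve_Cn_on HV; auto. intros; apply Hsub; auto.
  - pose proof (Hres _ (smooth_restrict branch_dom _ (smooth_ycoord f Hsm)) n).
    pose proof (Hres _ (smooth_on_comp_branch _ (smooth_ycoord f Hsm)) n).
    change (Cn_on n V (fun s => / branch_denom s * (curvature f s * ycoord f s + branch_kappa_g s * ycoord f (tau s)))).
    solve_Cn_on HV; auto. intros; apply Hsub; auto.
Qed.

Definition wronskian s := Derive along_numer s * branch_denom s - along_numer s * Derive branch_denom s.

Lemma wronskian_center : wronskian u0 = - along_numer u0 * denom_slope.
Proof. unfold wronskian. rewrite branch_denom_center. unfold denom_slope. ring. Qed.

Lemma wronskian_center_neq0 : wronskian u0 <> 0.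
Proof.
  rewrite wronskian_center. intro E. apply Rmult_integral in E as [E|E]; [|contradiction].
  apply along_numer_center_neq0. lra.
Qed.

Definition good_radius r := 0 < r /\ r <= delta /\ forall s, 0 < Rabs (s - u0) < r ->
  Rabs (branch_denom s - denom_slope * (s - u0)) <= Rabs denom_slope / 2 * Rabs (s - u0) /\
  Rabs (along_numer s - along_numer u0) < Rabs (along_numer u0) / 2 /\
  0 < wronskian s * wronskian u0.

Lemma good_radius_exists : exists r, good_radius r.
Proof.
  assert (HP0 : 0 < Rabs (along_numer u0)) by (apply Rabs_pos_lt, along_numer_center_neq0).
  assert (C : forall g, smooth_on branch_dom g -> continuous g u0)
    by (intros g Hs; apply (smooth_on_continuous _ _ Hs), branch_dom_center).
  destruct branch_denom_linear as [rA [HrA HA]].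
  destruct (continuous_eps_delta _ _ (C _ smooth_along_numer) (Rabs (along_numer u0) / 2))
    as [rB [HrB HB]]; [lra|].
  destruct (det_sign_near (Derive along_numer) along_numer (Derive branch_denom) branch_denom u0 u0)
    as [rC [HrC HC]]; try apply C; auto using smooth_on_Derive, smooth_along_numer, smooth_branch_denom.
  { fold (wronskian u0). apply wronskian_center_neq0. }
  assert (Hdel := branch_radius_pos).
  exists (Rmin (Rmin rA rB) (Rmin rC delta)).
  split; [repeat apply Rmin_pos; auto|]. split; [eapply Rle_trans; apply Rmin_r|].
  intros s [_ Hs].
  assert (Hm1 := Rmin_l (Rmin rA rB) (Rmin rC delta)). assert (Hm2 := Rmin_r (Rmin rA rB) (Rmin rC delta)).
  assert (Hm3 := Rmin_l rA rB). assert (Hm4 := Rmin_r rA rB). assert (Hm5 := Rmin_l rC delta).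
  split; [|split].
  - apply HA. lra.
  - apply HB. lra.
  - unfold wronskian. apply HC; lra.
Qed.

Definition good_rad : R := proj1_sig (constructive_indefinite_description _ good_radius_exists).

Lemma good_rad_spec : good_radius good_rad.
Proof. apply (proj2_sig (constructive_indefinite_description _ good_radius_exists)). Qed.

Lemma good_rad_pos : 0 < good_rad. Proof. apply good_rad_spec. Qed.
Lemma good_rad_le_radius : good_rad <= delta. Proof. apply good_rad_spec. Qed.

Definition punctured s := 0 < Rabs (s - u0) < good_rad.

Lemma punctured_right s : u0 < s < u0 + good_rad -> punctured s.
Proof. intros H. split; [apply Rabs_pos_lt; lra | apply Rabs_def1; lra]. Qed.

Lemma punctured_left s : u0 - good_rad < s < u0 -> punctured s.
Proof. intros H. split; [apply Rabs_pos_lt; lra | apply Rabs_def1; lra]. Qed.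

Lemma punctured_cases s : punctured s -> u0 - good_rad < s < u0 \/ u0 < s < u0 + good_rad.
Proof.
  intros [H0 H]. apply Rabs_def2 in H.
  destruct (Rtotal_order s u0) as [h|[->|h]]; [left; lra | | right; lra].
  rewrite Rminus_diag_eq, Rabs_R0 in H0; lra.
Qed.

Lemma punctured_dom s : punctured s -> branch_dom s.
Proof. intros [_ H]. apply branch_dom_Rabs. generalize good_rad_le_radius. lra. Qed.

Lemma punctured_denom_sign s : punctured s -> 0 < branch_denom s * (denom_slope * (s - u0)).
Proof.
  intros H. destruct (proj2 (proj2 good_rad_spec) s H) as [A _].
  apply Rmult_pos_of_half_close; [rewrite Rabs_mult; lra|].
  apply Rmult_integral_contrapositive. split; [exact HDd|].
  destruct H as [H _]. intro E. rewrite E, Rabs_R0 in H. lra.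
Qed.

Lemma punctured_denom_neq0 s : punctured s -> branch_denom s <> 0.
Proof. intros H E. generalize (punctured_denom_sign s H). rewrite E. lra. Qed.

Lemma punctured_along_numer_sign s : punctured s -> 0 < along_numer s * along_numer u0.
Proof.
  intros H. destruct (proj2 (proj2 good_rad_spec) s H) as [_ [B _]].
  apply Rmult_pos_of_close. assert (0 < Rabs (along_numer u0)) by (apply Rabs_pos_lt, along_numer_center_neq0).
  lra.
Qed.

Definition along_sign := sgn (wronskian u0).

Lemma along_sign_sq : along_sign * along_sign = 1.
Proof. apply sgn_mul_self. Qed.

Lemma along_sign_wronskian s : punctured s -> 0 < along_sign * wronskian s.
Proof.
  intros H. apply (sign_transfer _ _ (wronskian u0)); [apply along_sign_sq | apply good_rad_spec, H |].
  apply sgn_mul_pos, wronskian_center_neq0.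
Qed.

Lemma css_along_sign s : punctured s -> 0 < css_along s * (along_numer u0 * denom_slope * (s - u0)).
Proof.
  intros H. rewrite css_along_quotient by (apply punctured_denom_neq0; auto).
  assert (A := punctured_along_numer_sign s H). assert (B := punctured_denom_sign s H).
  assert (C := punctured_denom_neq0 s H).
  replace (along_numer s / branch_denom s * (along_numer u0 * denom_slope * (s - u0)))
    with ((along_numer s * along_numer u0) * (branch_denom s * (denom_slope * (s - u0))) /
          (branch_denom s * branch_denom s)) by (field; auto).
  apply Rdiv_lt_0_compat; [apply Rmult_lt_0_compat; auto | apply Rsqr_pos_lt; auto].
Qed.

Lemma along_sign_center : 0 < along_sign * (- along_numer u0 * denom_slope).
Proof. rewrite <- wronskian_center. apply sgn_mul_pos, wronskian_center_neq0. Qed.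

Lemma css_along_right s : punctured s -> u0 < s -> 0 < - along_sign * css_along s.
Proof.
  intros H Hs. apply (sign_transfer _ _ (along_numer u0 * denom_slope * (s - u0))).
  - rewrite <- along_sign_sq. ring.
  - apply css_along_sign, H.
  - assert (B := along_sign_center).
    replace (- along_sign * (along_numer u0 * denom_slope * (s - u0)))
      with (along_sign * (- along_numer u0 * denom_slope) * (s - u0)) by ring.
    apply Rmult_lt_0_compat; lra.
Qed.

Lemma css_along_left s : punctured s -> s < u0 -> 0 < along_sign * css_along s.
Proof.
  intros H Hs. apply (sign_transfer _ _ (along_numer u0 * denom_slope * (s - u0))).
  - apply along_sign_sq.
  - apply css_along_sign, H.
  - assert (B := along_sign_center).
    replace (along_sign * (along_numer u0 * denom_slope * (s - u0)))
      with (along_sign * (- along_numer u0 * denom_slope) * (u0 - s)) by ring.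
    apply Rmult_lt_0_compat; lra.
Qed.

Lemma css_along_unbounded M : exists rho, 0 < rho /\ forall s, 0 < Rabs (s - u0) < rho -> M < Rabs (css_along s).
Proof.
  set (P0 := along_numer u0).
  assert (HdD : 0 < Rabs denom_slope) by (apply Rabs_pos_lt; exact HDd).
  assert (HP0 : 0 < Rabs P0) by (apply Rabs_pos_lt, along_numer_center_neq0).
  set (K := (Rabs M + 1) * (3 / 2 * Rabs denom_slope)).
  assert (HK : 0 < K) by (unfold K; apply Rmult_lt_0_compat; generalize (Rabs_pos M); lra).
  exists (Rmin good_rad (Rabs P0 / 2 / K)). split; [apply Rmin_pos; [apply good_rad_pos | apply Rdiv_lt_0_compat; lra]|].
  intros s [Hs0 Hs].
  assert (Hs1 := Rlt_le_trans _ _ _ Hs (Rmin_l _ _)).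
  assert (Hs2 := Rlt_le_trans _ _ _ Hs (Rmin_r _ _)).
  assert (HPN : punctured s) by (split; auto).
  destruct (proj2 (proj2 good_rad_spec) s HPN) as [A [B _]]. fold P0 in B.
  assert (HDn := punctured_denom_neq0 s HPN).
  assert (HDa : 0 < Rabs (branch_denom s)) by (apply Rabs_pos_lt; auto).
  assert (A' : Rabs (branch_denom s) <= 3 / 2 * Rabs denom_slope * Rabs (s - u0)).
  { assert (Rabs (branch_denom s) <=
      Rabs (branch_denom s - denom_slope * (s - u0)) + Rabs (denom_slope * (s - u0))).
    { replace (branch_denom s) with ((branch_denom s - denom_slope * (s - u0)) + denom_slope * (s - u0))
        at 1 by ring. apply Rabs_triang. }
    rewrite Rabs_mult in H. lra. }
  assert (B' : Rabs P0 / 2 < Rabs (along_numer s)).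
  { assert (Rabs P0 <= Rabs (along_numer s) + Rabs (along_numer s - P0)).
    { replace P0 with (along_numer s - (along_numer s - P0)) at 1 by ring.
      eapply Rle_trans; [apply Rabs_triang|]. rewrite Rabs_Ropp. lra. }
    lra. }
  rewrite css_along_quotient by auto. unfold Rdiv. rewrite Rabs_mult, Rabs_inv.
  apply (Rmult_lt_reg_r (Rabs (branch_denom s))); auto. rewrite Rmult_assoc, Rinv_l, Rmult_1_r by lra.
  assert (K * Rabs (s - u0) < Rabs P0 / 2).
  { apply (Rmult_lt_compat_l K) in Hs2; auto.
    replace (K * (Rabs P0 / 2 / K)) with (Rabs P0 / 2) in Hs2 by (field; lra). lra. }
  assert ((Rabs M + 1) * Rabs (branch_denom s) <= K * Rabs (s - u0)).
  { unfold K. replace ((Rabs M + 1) * (3 / 2 * Rabs denom_slope) * Rabs (s - u0))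
      with ((Rabs M + 1) * (3 / 2 * Rabs denom_slope * Rabs (s - u0))) by ring.
    apply Rmult_le_compat_l; auto. generalize (Rabs_pos M); lra. }
  assert (M * Rabs (branch_denom s) <= Rabs M * Rabs (branch_denom s))
    by (apply Rmult_le_compat_r; [lra | apply Rle_abs]).
  lra.
Qed.

Definition dalong s := Derive cssx s * w1 + Derive cssy s * w2.
Definition ddalong s := Derive (Derive cssx) s * w1 + Derive (Derive cssy) s * w2.
Definition dacross s := w1 * Derive cssy s - w2 * Derive cssx s.
Definition ddacross s := w1 * Derive (Derive cssy) s - w2 * Derive (Derive cssx) s.

Lemma punctured_interval s : punctured s ->
  exists a b, a < s < b /\ forall t, a < t < b -> branch_dom t /\ branch_denom t <> 0.
Proof.
  intros HP. assert (Hr := good_rad_pos).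
  assert (Hok : forall t, punctured t -> branch_dom t /\ branch_denom t <> 0)
    by (intros; split; [apply punctured_dom | apply punctured_denom_neq0]; auto).
  destruct (punctured_cases s HP) as [H|H].
  - exists (u0 - good_rad), u0. split; [lra|]. intros t Ht. apply Hok, punctured_left, Ht.
  - exists u0, (u0 + good_rad). split; [lra|]. intros t Ht. apply Hok, punctured_right, Ht.
Qed.

Lemma is_derive_css_coords s : punctured s ->
  is_derive css_along s (dalong s) /\ is_derive css_across s (dacross s) /\
  is_derive dalong s (ddalong s) /\ is_derive dacross s (ddacross s).
Proof.
  intros HP. destruct (punctured_interval s HP) as [a [b [Hs Hok]]].
  destruct (smooth_css_on (fun t => a < t < b) (open_interval a b) Hok) as [S1 S2].
  assert (E1 := Derive_correct _ _ (smooth_on_ex_derive _ _ S1 s Hs)).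
  assert (E2 := Derive_correct _ _ (smooth_on_ex_derive _ _ S2 s Hs)).
  assert (E3 := Derive_correct _ _ (smooth_on_ex_derive _ _ (smooth_on_Derive _ _ S1) s Hs)).
  assert (E4 := Derive_correct _ _ (smooth_on_ex_derive _ _ (smooth_on_Derive _ _ S2) s Hs)).
  split; [|split; [|split]].
  - apply (is_derive_ext_R (fun s => (cssx s - fst (f u0)) * w1 + (cssy s - snd (f u0)) * w2));
      [reflexivity|].
    eapply is_derive_eq.
    + apply is_derive_plus_R; (apply is_derive_mult_R;
        [apply is_derive_minus_R; [|apply is_derive_const_R] | apply is_derive_const_R]); eauto.
    + unfold dalong. ring.
  - apply (is_derive_ext_R (fun s => w1 * (cssy s - snd (f u0)) - w2 * (cssx s - fst (f u0))));
      [reflexivity|].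
    eapply is_derive_eq.
    + apply is_derive_minus_R; (apply is_derive_mult_R;
        [apply is_derive_const_R | apply is_derive_minus_R; [|apply is_derive_const_R]]); eauto.
    + unfold dacross. ring.
  - unfold dalong at 1. eapply is_derive_eq.
    + apply is_derive_plus_R; (apply is_derive_mult_R; [|apply is_derive_const_R]); eauto.
    + unfold ddalong. ring.
  - unfold dacross at 1. eapply is_derive_eq.
    + apply is_derive_minus_R; (apply is_derive_mult_R; [apply is_derive_const_R|]); eauto.
    + unfold ddacross. ring.
Qed.

Lemma dalong_eq s : punctured s -> dalong s = wronskian s / branch_denom s ^ 2.
Proof.
  intros HP. destruct (punctured_interval s HP) as [a [b [Hs Hok]]].
  destruct (is_derive_css_coords s HP) as [D1 _].
  apply (is_derive_same_value css_along s); auto.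
  apply (is_derive_ext_loc (fun y => along_numer y / branch_denom y)).
  - apply (filter_imp (fun y => a < y < b)); [|apply locally_interval; auto].
    intros y Hy. symmetry. apply css_along_quotient, Hok, Hy.
  - assert (Hd := punctured_dom s HP).
    apply is_derive_div; [| | apply punctured_denom_neq0; auto]; apply Derive_correct.
    + apply (smooth_on_ex_derive _ _ smooth_along_numer), Hd.
    + apply (smooth_on_ex_derive _ _ smooth_branch_denom), Hd.
Qed.

Lemma along_sign_dalong s : punctured s -> 0 < along_sign * dalong s.
Proof.
  intros HP. rewrite dalong_eq; auto.
  assert (A := along_sign_wronskian s HP). assert (B := punctured_denom_neq0 s HP).
  replace (along_sign * (wronskian s / branch_denom s ^ 2))
    with ((along_sign * wronskian s) / (branch_denom s * branch_denom s)) by (field; auto).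
  apply Rdiv_lt_0_compat; auto. apply Rsqr_pos_lt; auto.
Qed.

Lemma css_branch_ends M eta : 0 < eta -> exists s1 s2, punctured s1 /\ punctured s2 /\
  M < css_along s1 /\ css_along s2 < - M /\ Rabs (css_across s1) < eta /\ Rabs (css_across s2) < eta.
Proof.
  intros He.
  destruct (across_branch_small eta He) as [r1 [Hr1 H1]].
  destruct (css_along_unbounded (Rabs M)) as [r2 [Hr2 H2]].
  assert (Hr0 := good_rad_pos).
  set (m := Rmin (Rmin r1 r2) good_rad).
  assert (Hm : 0 < m) by (repeat apply Rmin_pos; auto).
  assert (Hm1 : m <= r1) by (eapply Rle_trans; [apply Rmin_l|apply Rmin_l]).
  assert (Hm2 : m <= r2) by (eapply Rle_trans; [apply Rmin_l|apply Rmin_r]).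
  assert (Hm3 : m <= good_rad) by apply Rmin_r.
  assert (AR : 0 < Rabs (u0 + m / 2 - u0) < m).
  { replace (u0 + m / 2 - u0) with (m / 2) by ring. rewrite Rabs_pos_eq; lra. }
  assert (AL : 0 < Rabs (u0 - m / 2 - u0) < m).
  { replace (u0 - m / 2 - u0) with (- (m / 2)) by ring. rewrite Rabs_Ropp, Rabs_pos_eq; lra. }
  assert (PR : punctured (u0 + m / 2)) by (split; lra).
  assert (PL : punctured (u0 - m / 2)) by (split; lra).
  assert (YR := proj2 (H1 (u0 + m / 2) ltac:(lra))).
  assert (YL := proj2 (H1 (u0 - m / 2) ltac:(lra))).
  assert (XR := H2 (u0 + m / 2) ltac:(lra)).
  assert (XL := H2 (u0 - m / 2) ltac:(lra)).
  assert (SR := css_along_right (u0 + m / 2) PR ltac:(lra)).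
  assert (SL := css_along_left (u0 - m / 2) PL ltac:(lra)).
  assert (HM1 := Rle_abs M). assert (HM2 := Rabs_maj2 M).
  unfold along_sign in SR, SL. destruct (sgn_cases (wronskian u0)) as [h|h]; rewrite h in SR, SL.
  - exists (u0 - m / 2), (u0 + m / 2). do 2 (split; auto). split; [|split; [|split; auto]].
    + rewrite (Rabs_pos_eq (css_along (u0 - m / 2))) in XL by lra. lra.
    + rewrite (Rabs_left (css_along (u0 + m / 2))) in XR by lra. lra.
  - exists (u0 + m / 2), (u0 - m / 2). do 2 (split; auto). split; [|split; [|split; auto]].
    + rewrite (Rabs_pos_eq (css_along (u0 + m / 2))) in XR by lra. lra.
    + rewrite (Rabs_left (css_along (u0 - m / 2))) in XL by lra. lra.
Qed.

Lemma css_along_bounded_away rho : 0 < rho ->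
  exists B, forall s, rho <= Rabs (s - u0) <= good_rad / 2 -> Rabs (css_along s) <= B.
Proof.
  intros Hrho. assert (Hr0 := good_rad_pos).
  assert (Hcont : forall s, punctured s -> continuity_pt (fun t => Rabs (css_along t)) s).
  { intros s HP. apply (continuity_pt_comp css_along Rabs); [|apply Rcontinuity_abs].
    apply continuity_pt_filterlim, ex_derive_continuous_R. exists (dalong s). apply (is_derive_css_coords s HP). }
  destruct (Rle_or_lt rho (good_rad / 2)) as [h|h]; [|exists 0; intros s Hs; lra].
  destruct (continuity_ab_maj (fun t => Rabs (css_along t)) (u0 + rho) (u0 + good_rad / 2)) as [m1 [Hm1 _]];
    [lra | intros c Hc; apply Hcont, punctured_right; lra |].
  destruct (continuity_ab_maj (fun t => Rabs (css_along t)) (u0 - good_rad / 2) (u0 - rho)) as [m2 [Hm2 _]];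
    [lra | intros c Hc; apply Hcont, punctured_left; lra |].
  exists (Rmax (Rabs (css_along m1)) (Rabs (css_along m2))). intros s [Hs1 Hs2].
  destruct (Rle_or_lt u0 s) as [k|k].
  - rewrite Rabs_pos_eq in Hs1, Hs2 by lra. eapply Rle_trans; [apply Hm1; lra | apply Rmax_l].
  - rewrite Rabs_left in Hs1, Hs2 by lra. eapply Rle_trans; [apply Hm2; lra | apply Rmax_r].
Qed.

Definition bend s := branch_css_curv_num f tau s.

Lemma det_bend s : dalong s * ddacross s - dacross s * ddalong s = chord_len2 * bend s.
Proof.
  change (bend s) with (Derive cssx s * Derive (Derive cssy) s - Derive cssy s * Derive (Derive cssx) s).
  unfold dalong, ddalong, dacross, ddacross, chord_len2, dot. fold w1 w2. ring.
Qed.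

Hypothesis Hsc : forall s1 s2, u0 - delta < s1 < u0 -> u0 < s2 < u0 + delta ->
  branch_css_curv_num f tau s1 * branch_css_curv_num f tau s2 < 0.

Definition bend_sign := - sgn (bend (u0 - delta / 2)).

Lemma bend_sign_sq : bend_sign * bend_sign = 1.
Proof. unfold bend_sign. rewrite <- (sgn_mul_self (bend (u0 - delta / 2))). ring. Qed.

Lemma bend_right s : u0 < s < u0 + delta -> 0 < bend_sign * bend s.
Proof.
  intros Hs. assert (Hd := branch_radius_pos).
  assert (H := Hsc (u0 - delta / 2) s ltac:(lra) Hs). fold (bend (u0 - delta / 2)) (bend s) in H.
  assert (Hnz : bend (u0 - delta / 2) <> 0) by (intro E; rewrite E in H; lra).
  apply (sign_transfer _ _ (- bend (u0 - delta / 2))); [apply bend_sign_sq | nra |].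
  unfold bend_sign. replace (- sgn (bend (u0 - delta / 2)) * - bend (u0 - delta / 2))
    with (sgn (bend (u0 - delta / 2)) * bend (u0 - delta / 2)) by ring.
  apply sgn_mul_pos, Hnz.
Qed.

Lemma bend_left s : u0 - delta < s < u0 -> 0 < - bend_sign * bend s.
Proof.
  intros Hs. assert (Hd := branch_radius_pos).
  assert (H := Hsc s (u0 + delta / 2) Hs ltac:(lra)). fold (bend s) (bend (u0 + delta / 2)) in H.
  assert (P := bend_right (u0 + delta / 2) ltac:(lra)).
  apply (sign_transfer _ _ (- bend (u0 + delta / 2))); [rewrite <- bend_sign_sq; ring | nra | nra].
Qed.

Lemma css_across_right s : u0 < s < u0 + good_rad -> 0 < along_sign * bend_sign * css_across s.
Proof.
  assert (Hrd := good_rad_le_radius). assert (W := chord_len2_pos).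
  assert (HP : forall t, u0 < t < u0 + good_rad -> punctured t) by apply punctured_right.
  apply (convex_arc_one_side css_along css_across dalong dacross ddalong ddacross u0 good_rad);
    try (intros t Ht; apply (is_derive_css_coords t (HP t Ht))).
  - apply bend_sign_sq.
  - intros t Ht. apply along_sign_dalong, HP, Ht.
  - intros t Ht. rewrite det_bend.
    replace (bend_sign * (chord_len2 * bend t)) with (chord_len2 * (bend_sign * bend t)) by ring.
    apply Rmult_lt_0_compat; [lra | apply bend_right; lra].
  - intros eps He. destruct (across_branch_small eps He) as [rho [Hr H]].
    exists rho. split; auto. intros t Ht. apply H. split; [apply Rabs_pos_lt | apply Rabs_def1]; lra.
  - intros M. destruct (css_along_unbounded M) as [rho [Hr H]].
    exists rho. split; auto. intros t Ht. apply H. split; [apply Rabs_pos_lt | apply Rabs_def1]; lra.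
  - apply along_sign_sq.
Qed.

Lemma css_across_left s : u0 - good_rad < s < u0 -> 0 < - along_sign * bend_sign * css_across s.
Proof.
  intros Hs. replace s with (2 * u0 - (2 * u0 - s)) by ring.
  assert (Hrd := good_rad_le_radius). assert (W := chord_len2_pos).
  assert (HP : forall t, u0 < t < u0 + good_rad -> punctured (2 * u0 - t)) by (intros; apply punctured_left; lra).
  apply (convex_arc_one_side (fun t => css_along (2 * u0 - t)) (fun t => css_across (2 * u0 - t))
    (fun t => - dalong (2 * u0 - t)) (fun t => - dacross (2 * u0 - t))
    (fun t => ddalong (2 * u0 - t)) (fun t => ddacross (2 * u0 - t)) u0 good_rad);
    try (intros t Ht; destruct (is_derive_css_coords _ (HP t Ht)) as [D1 [D2 [D3 D4]]]).
  - apply bend_sign_sq.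
  - apply is_derive_reflect, D1.
  - apply is_derive_reflect, D2.
  - eapply is_derive_eq; [apply is_derive_opp_R, is_derive_reflect, D4 | ring].
  - eapply is_derive_eq; [apply is_derive_opp_R, is_derive_reflect, D3 | ring].
  - replace (- along_sign * - dalong (2 * u0 - t)) with (along_sign * dalong (2 * u0 - t)) by ring.
    apply along_sign_dalong, HP, Ht.
  - replace (bend_sign * (- dalong (2 * u0 - t) * ddacross (2 * u0 - t) - - dacross (2 * u0 - t) * ddalong (2 * u0 - t)))
      with (- bend_sign * (dalong (2 * u0 - t) * ddacross (2 * u0 - t) - dacross (2 * u0 - t) * ddalong (2 * u0 - t)))
      by ring.
    rewrite det_bend.
    replace (- bend_sign * (chord_len2 * bend (2 * u0 - t))) with (chord_len2 * (- bend_sign * bend (2 * u0 - t))) by ring.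
    apply Rmult_lt_0_compat; [lra | apply bend_left; lra].
  - intros eps He. destruct (across_branch_small eps He) as [rho [Hr H]].
    exists rho. split; auto. intros t Ht. apply H. split; [apply Rabs_pos_lt | apply Rabs_def1]; lra.
  - intros M. destruct (css_along_unbounded M) as [rho [Hr H]].
    exists rho. split; auto. intros t Ht. apply H. split; [apply Rabs_pos_lt | apply Rabs_def1]; lra.
  - rewrite <- along_sign_sq. ring.
  - lra.
Qed.

Definition side := - bend_sign.

Lemma side_cases : side = 1 \/ side = -1.
Proof.
  unfold side, bend_sign. destruct (sgn_cases (bend (u0 - delta / 2))) as [h|h]; rewrite h; [left|right]; ring.
Qed.

Lemma css_side s : punctured s -> 0 < side * css_along s * css_across s.
Proof.
  intros HP. unfold side.
  destruct (punctured_cases s HP) as [H|H].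
  - assert (A := css_across_left s H). assert (B := css_along_left s HP ltac:(lra)).
    assert (P := Rmult_lt_0_compat _ _ A B).
    replace (- bend_sign * css_along s * css_across s)
      with ((- along_sign * bend_sign * css_across s) * (along_sign * css_along s)); [exact P|].
    transitivity (- (along_sign * along_sign) * bend_sign * css_along s * css_across s); [|rewrite along_sign_sq]; ring.
  - assert (A := css_across_right s H). assert (B := css_along_right s HP ltac:(lra)).
    assert (P := Rmult_lt_0_compat _ _ A B).
    replace (- bend_sign * css_along s * css_across s)
      with ((along_sign * bend_sign * css_across s) * (- along_sign * css_along s)); [exact P|].
    transitivity (- (along_sign * along_sign) * bend_sign * css_along s * css_across s); [|rewrite along_sign_sq]; ring.
Qed.
End AsymptoticBranch.

Lemma is_lim_seq_smooth (g : R -> R) U (l : R) :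
  smooth g -> is_lim_seq U l -> is_lim_seq (fun k => g (U k)) (g l).
Proof. intros Hs. apply is_lim_seq_continuous_R, smooth_continuous, Hs. Qed.

Section CurveLimits.
Variable f : curve.
Hypothesis Hg : generic f.
Let Hsm := generic_smooth f Hg.
Let Hreg := generic_regular f Hg.

Lemma continuous_along_curve u0 v0 z : continuous (fun s => along f u0 v0 (f s)) z.
Proof.
  apply ex_derive_continuous_R.
  apply (ex_derive_ext (fun s => (xcoord f s - fst (f u0)) * (fst (f v0) - fst (f u0))
                                 + (ycoord f s - snd (f u0)) * (snd (f v0) - snd (f u0)))); [reflexivity|].
  eexists. apply is_derive_plus_R;
    (apply is_derive_mult_R; [apply is_derive_minus_R; [|apply is_derive_const_R] | apply is_derive_const_R]).
  - apply (is_derive_xcoord f Hsm).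
  - apply (is_derive_ycoord f Hsm).
Qed.


Lemma is_lim_seq_det_vel U V (l1 l2 : R) : is_lim_seq U l1 -> is_lim_seq V l2 ->
  is_lim_seq (fun k => det (d1 f (U k)) (d1 f (V k))) (det (d1 f l1) (d1 f l2)).
Proof.
  intros H1 H2. rewrite det_d1_eq.
  apply (is_lim_seq_ext (fun k => xvel f (U k) * yvel f (V k) - yvel f (U k) * xvel f (V k))); [reflexivity|].
  apply is_lim_seq_minus'; apply is_lim_seq_mult'; apply is_lim_seq_smooth; auto using smooth_xvel, smooth_yvel.
Qed.

Lemma is_lim_seq_css_denom U V (l1 l2 : R) : is_lim_seq U l1 -> is_lim_seq V l2 ->
  is_lim_seq (fun k => css_denom f (U k) (V k)) (css_denom f l1 l2).
Proof.
  intros H1 H2. unfold css_denom. rewrite kappa_g_eq.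
  apply (is_lim_seq_ext (fun k => curvature f (U k) + - ((xvel f (U k) * xvel f (V k) + yvel f (U k) * yvel f (V k))
    / (speed f (U k) * speed f (V k))) * curvature f (V k))); [reflexivity|].
  assert (Hs : forall g W (l : R), smooth g -> is_lim_seq W l -> is_lim_seq (fun k => g (W k)) (g l))
    by (intros; apply is_lim_seq_smooth; auto).
  apply is_lim_seq_plus'; [apply Hs; auto using smooth_curvature|].
  apply is_lim_seq_mult'; [apply is_lim_seq_opp_R, is_lim_seq_div' | apply Hs; auto using smooth_curvature].
  - apply is_lim_seq_plus'; apply is_lim_seq_mult'; apply Hs; auto using smooth_xvel, smooth_yvel.
  - apply is_lim_seq_mult'; apply Hs; auto using smooth_speed.
  - apply Rmult_integral_contrapositive; split; apply speed_neq0; auto.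
Qed.

Lemma along_css_point u0 v0 u v : css_denom f u v <> 0 ->
  along f u0 v0 (css_point f u v) =
  (curvature f u * along f u0 v0 (f u) + kappa_g f u v * along f u0 v0 (f v)) / css_denom f u v.
Proof.
  intros H. unfold along, css_point, dot, psub, pscal, padd. simpl.
  unfold css_denom in *. field. auto.
Qed.

Lemma is_lim_seq_along_css u0 v0 U V (l1 l2 : R) : is_lim_seq U l1 -> is_lim_seq V l2 ->
  css_denom f l1 l2 <> 0 -> (forall k, css_denom f (U k) (V k) <> 0) ->
  is_lim_seq (fun k => along f u0 v0 (css_point f (U k) (V k))) (along f u0 v0 (css_point f l1 l2)).
Proof.
  intros H1 H2 HD HDk. rewrite along_css_point by auto.
  apply (is_lim_seq_ext (fun k => (curvature f (U k) * along f u0 v0 (f (U k))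
    + kappa_g f (U k) (V k) * along f u0 v0 (f (V k))) / css_denom f (U k) (V k)));
    [intros; symmetry; apply along_css_point; auto|].
  assert (HK : forall W (l : R), is_lim_seq W l -> is_lim_seq (fun k => curvature f (W k)) (curvature f l))
    by (intros; apply is_lim_seq_smooth; auto using smooth_curvature).
  assert (HA : forall W (l : R), is_lim_seq W l -> is_lim_seq (fun k => along f u0 v0 (f (W k))) (along f u0 v0 (f l)))
    by (intros; apply (is_lim_seq_continuous_R (fun s => along f u0 v0 (f s))); auto using continuous_along_curve).
  apply is_lim_seq_div'; auto using is_lim_seq_css_denom.
  apply is_lim_seq_plus'; apply is_lim_seq_mult'; auto.
  assert (E : forall k, kappa_g f (U k) (V k) = css_denom f (U k) (V k) - curvature f (U k))
    by (intros; unfold css_denom; ring).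
  apply (is_lim_seq_ext (fun k => css_denom f (U k) (V k) - curvature f (U k))); [intros; rewrite E; auto|].
  replace (kappa_g f l1 l2) with (css_denom f l1 l2 - curvature f l1) by (unfold css_denom; ring).
  apply is_lim_seq_minus'; auto using is_lim_seq_css_denom.
Qed.

End CurveLimits.

(** * Parallel pairs near the diagonal *)

Lemma Rabs_between_lt u v z s0 r : Rabs (u - s0) < r -> Rabs (v - s0) < r ->
  Rmin u v <= z <= Rmax u v -> Rabs (z - s0) < r.
Proof.
  intros Hu Hv Hz. apply Rabs_def2 in Hu. apply Rabs_def2 in Hv. apply Rabs_def1;
    unfold Rmin, Rmax in Hz; destruct (Rle_dec u v); lra.
Qed.

Lemma Rabs_weighted_diff_le k1 k2 a b : k1 * k2 < 0 ->
  Rabs ((k1 * a - k2 * b) / (k1 - k2)) <= Rmax (Rabs a) (Rabs b).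
Proof.
  intros H.
  assert (Hn : k1 - k2 <> 0) by (intro E; assert (k1 = k2) by lra; subst; nra).
  unfold Rdiv. rewrite Rabs_mult, Rabs_inv.
  apply (Rmult_le_reg_r (Rabs (k1 - k2))); [apply Rabs_pos_lt; auto|].
  rewrite Rmult_assoc, Rinv_l, Rmult_1_r by (apply Rabs_no_R0; auto).
  assert (Ma := Rmax_l (Rabs a) (Rabs b)). assert (Mb := Rmax_r (Rabs a) (Rabs b)).
  assert (E : Rabs (k1 - k2) = Rabs k1 + Rabs k2).
  { destruct (Rlt_or_le 0 k1) as [h|h].
    - assert (k2 < 0) by nra. rewrite (Rabs_pos_eq k1), (Rabs_left k2), Rabs_pos_eq; lra.
    - assert (k1 < 0) by (destruct (Req_dec k1 0); [subst; lra | lra]). assert (0 < k2) by nra.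
      rewrite (Rabs_left k1), (Rabs_pos_eq k2), Rabs_left; lra. }
  rewrite E. unfold Rminus. eapply Rle_trans; [apply Rabs_triang|]. rewrite Rabs_Ropp, !Rabs_mult.
  assert (0 <= Rabs k1) by apply Rabs_pos. assert (0 <= Rabs k2) by apply Rabs_pos.
  assert (Rabs k1 * Rabs a <= Rabs k1 * Rmax (Rabs a) (Rabs b)) by (apply Rmult_le_compat_l; auto).
  assert (Rabs k2 * Rabs b <= Rabs k2 * Rmax (Rabs a) (Rabs b)) by (apply Rmult_le_compat_l; auto).
  lra.
Qed.

Section NearDiagonal.
Variable f : curve.
Hypothesis Hg : generic f.
Let Hsm := generic_smooth f Hg.
Let Hreg := generic_regular f Hg.

Definition vel_dot u z := xvel f u * xvel f z + yvel f u * yvel f z.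

(** [det (f' u) (f' z) / dot (f' u) (f' z)] is the tangent of the angle
    between the tangents at [u] and [z]; its derivative in [z] is a positive
    multiple of the curvature at [z]. *)
Lemma is_derive_tangent_ratio u c : vel_dot u c <> 0 ->
  is_derive (fun z => (xvel f u * yvel f z - yvel f u * xvel f z) / vel_dot u z) c
    ((xvel f u * xvel f u + yvel f u * yvel f u) * (xvel f c * yacc f c - yvel f c * xacc f c)
      / vel_dot u c ^ 2).
Proof.
  intros Hc. unfold vel_dot in *. eapply is_derive_eq.
  - apply is_derive_div; [| |exact Hc].
    + apply is_derive_minus_R; (apply is_derive_mult_R; [apply is_derive_const_R|]).
      * apply (is_derive_yvel f Hsm).
      * apply (is_derive_xvel f Hsm).
    + apply is_derive_plus_R; (apply is_derive_mult_R; [apply is_derive_const_R|]).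
      * apply (is_derive_xvel f Hsm).
      * apply (is_derive_yvel f Hsm).
  - cbv beta. field. exact Hc.
Qed.

Lemma parallel_pair_inflexion_between u v : u <> v ->
  (forall z, Rmin u v <= z <= Rmax u v -> 0 < vel_dot u z) ->
  det (d1 f u) (d1 f v) = 0 -> exists xi, Rmin u v < xi < Rmax u v /\ curvature f xi = 0.
Proof.
  intros Huv Hdot Hdet.
  set (G := fun z => (xvel f u * yvel f z - yvel f u * xvel f z) / vel_dot u z).
  assert (Hab : Rmin u v < Rmax u v) by (unfold Rmin, Rmax; destruct (Rle_dec u v); lra).
  destruct (MVT_cor2 G (fun c => (xvel f u * xvel f u + yvel f u * yvel f u) *
      (xvel f c * yacc f c - yvel f c * xacc f c) / vel_dot u c ^ 2) (Rmin u v) (Rmax u v) Hab)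
    as [c [Hc1 Hc2]].
  { intros c Hc. apply is_derive_Reals, is_derive_tangent_ratio.
    apply Rgt_not_eq, Hdot, Hc. }
  exists c. split; auto.
  assert (Gu : G u = 0) by (unfold G; unfold Rdiv; ring).
  assert (Gv : G v = 0) by (unfold G; rewrite det_d1_eq in Hdet; rewrite Hdet; unfold Rdiv; ring).
  replace (G (Rmax u v) - G (Rmin u v)) with 0 in Hc1
    by (unfold Rmin, Rmax; destruct (Rle_dec u v); rewrite Gu, Gv; ring).
  assert (Hd := Hdot c ltac:(lra)). assert (Hp := vel_sq_pos f Hreg u).
  assert (Num : (xvel f u * xvel f u + yvel f u * yvel f u) * (xvel f c * yacc f c - yvel f c * xacc f c) = 0).
  { apply (Rmult_eq_reg_r ((Rmax u v - Rmin u v) / vel_dot u c ^ 2)).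
    - transitivity 0; [|ring]. rewrite Hc1. field. lra.
    - apply Rmult_integral_contrapositive. split; [lra|].
      apply Rinv_neq_0_compat, pow_nonzero. lra. }
  apply Rmult_integral in Num as [N|N]; [lra|].
  rewrite curvature_eq, N. unfold Rdiv. ring.
Qed.

Lemma vel_dot_pos_near s0 : exists r, 0 < r /\ forall u z, Rabs (u - s0) < r -> Rabs (z - s0) < r ->
  0 < vel_dot u z.
Proof.
  assert (C : forall g, smooth g -> continuous g s0) by (intros; apply smooth_continuous; auto).
  assert (Hp := vel_sq_pos f Hreg s0).
  destruct (det_sign_near (xvel f) (yvel f) (fun z => - yvel f z) (xvel f) s0 s0) as [r [Hr H]];
    auto using smooth_xvel, smooth_yvel.
  - apply (continuous_opp (yvel f)), C, smooth_yvel, Hsm.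
  - lra.
  - exists r. split; auto. intros u z Hu Hz. specialize (H u z Hu Hz).
    unfold vel_dot. apply (pos_of_mult_pos_r _ (xvel f s0 * xvel f s0 - yvel f s0 * - yvel f s0)); [|lra].
    replace (xvel f u * xvel f z + yvel f u * yvel f z) with (xvel f u * xvel f z - yvel f u * - yvel f z)
      by ring. exact H.
Qed.

Lemma inflexion_sign_change s0 : curvature f s0 = 0 ->
  exists r, 0 < r /\ forall z, 0 < Rabs (z - s0) < r ->
    0 < curvature f z * (Derive (curvature f) s0 * (z - s0)).
Proof.
  intros Hk0. set (kp := Derive (curvature f) s0).
  assert (Hkp : kp <> 0) by (apply (generic_inflexions f Hg), Hk0).
  assert (Hkpa : 0 < Rabs kp) by (apply Rabs_pos_lt; auto).
  destruct (is_derive_first_order _ _ _ (smooth_is_derive _ s0 (smooth_curvature f Hsm Hreg)) (Rabs kp / 2))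
    as [r [Hr HK]]; [lra|].
  exists r. split; auto. intros z [Hz0 Hz]. specialize (HK z Hz). fold kp in HK.
  rewrite Hk0, Rminus_0_r in HK. apply Rmult_pos_of_half_close; [rewrite Rabs_mult; lra|].
  apply Rmult_integral_contrapositive. split; auto. intro E. rewrite E, Rabs_R0 in Hz0. lra.
Qed.

Lemma parallel_pair_near_point s0 : exists r, 0 < r /\ forall u v,
  Rabs (u - s0) < r -> Rabs (v - s0) < r -> parallel_pair f u v ->
  tcos f u v = 1 /\ exists xi, Rmin u v < xi < Rmax u v /\ curvature f xi = 0.
Proof.
  destruct (vel_dot_pos_near s0) as [r [Hr Hdn]].
  exists r. split; auto. intros u v Hu Hv [Hne Hdet]. split.
  - assert (S := tcos_sq f Hreg u v Hdet).
    assert (0 < tcos f u v); [|nra].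
    apply Rdiv_lt_0_compat; [apply (Hdn u v); auto | apply Rmult_lt_0_compat; apply speed_pos; auto].
  - apply parallel_pair_inflexion_between; auto.
    + intro E. apply Hne. rewrite E. auto.
    + intros z Hz. apply Hdn; auto. apply (Rabs_between_lt u v); auto.
Qed.

(** Near the diagonal, parallel pairs only occur across an inflexion; there
    the two curvatures have opposite signs and the CSS point is a weighted
    mean of the two points of the pair. *)
Lemma along_css_near_diagonal u0 v0 s0 : exists r, 0 < r /\ forall u v,
  Rabs (u - s0) < r -> Rabs (v - s0) < r -> parallel_pair f u v -> css_denom f u v <> 0 ->
  Rabs (along f u0 v0 (css_point f u v)) <= Rmax (Rabs (along f u0 v0 (f u))) (Rabs (along f u0 v0 (f v))).
Proof.
  destruct (parallel_pair_near_point s0) as [r1 [Hr1 Hnear]].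
  destruct (Req_dec (curvature f s0) 0) as [Hk0|Hk0].
  - destruct (inflexion_sign_change s0 Hk0) as [r2 [Hr2 Ksign]].
    set (kp := Derive (curvature f) s0) in Ksign.
    exists (Rmin r1 r2). split; [apply Rmin_pos; auto|]. intros u v Hu Hv Hpp HD.
    assert (Hm1 := Rmin_l r1 r2). assert (Hm2 := Rmin_r r1 r2).
    destruct (Hnear u v ltac:(lra) ltac:(lra) Hpp) as [Htcos [xi [Hxi Kxi]]].
    assert (Hxs : xi = s0).
    { destruct (Req_dec xi s0) as [E|E]; auto. exfalso.
      assert (Hxr : Rabs (xi - s0) < r2) by (apply (Rabs_between_lt u v); lra).
      assert (P := Ksign xi (conj (Rabs_pos_lt (xi - s0) ltac:(lra)) Hxr)). rewrite Kxi in P. lra. }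
    subst xi.
    assert (Hopp : (u - s0) * (v - s0) < 0) by (unfold Rmin, Rmax in Hxi; destruct (Rle_dec u v); nra).
    assert (KU : 0 < curvature f u * (kp * (u - s0))).
    { apply Ksign. split; [apply Rabs_pos_lt; intro E; rewrite E in Hopp | ]; lra. }
    assert (KW : 0 < curvature f v * (kp * (v - s0))).
    { apply Ksign. split; [apply Rabs_pos_lt; intro E; rewrite E in Hopp | ]; lra. }
    assert (Hkk : curvature f u * curvature f v < 0).
    { assert (P := Rmult_lt_0_compat _ _ KU KW).
      replace (curvature f u * (kp * (u - s0)) * (curvature f v * (kp * (v - s0))))
        with ((curvature f u * curvature f v) * ((kp * kp) * ((u - s0) * (v - s0)))) in P by ring.
      assert (0 < kp * kp) by (apply Rsqr_pos_lt; intro E; rewrite E in KU; lra).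
      assert ((kp * kp) * ((u - s0) * (v - s0)) < 0) by (apply Rmult_pos_neg; auto).
      destruct (Rlt_or_le (curvature f u * curvature f v) 0) as [q|q]; auto. nra. }
    replace (along f u0 v0 (css_point f u v))
      with ((curvature f u * along f u0 v0 (f u) - curvature f v * along f u0 v0 (f v))
            / (curvature f u - curvature f v)).
    + apply Rabs_weighted_diff_le; auto.
    + unfold along, css_point, dot, psub, pscal, padd. simpl.
      unfold css_denom in *. rewrite kappa_g_tcos, Htcos in *. field. lra.
  - assert (Hka : 0 < Rabs (curvature f s0)) by (apply Rabs_pos_lt; auto).
    destruct (continuous_eps_delta _ _ (smooth_continuous _ s0 (smooth_curvature f Hsm Hreg)) _ Hka)
      as [r2 [Hr2 HK]].
    exists (Rmin r1 r2). split; [apply Rmin_pos; auto|]. intros u v Hu Hv Hpp _. exfalso.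
    assert (Hm1 := Rmin_l r1 r2). assert (Hm2 := Rmin_r r1 r2).
    destruct (Hnear u v ltac:(lra) ltac:(lra) Hpp) as [_ [xi [Hxi Kxi]]].
    assert (Hxr : Rabs (xi - s0) < r2) by (apply (Rabs_between_lt u v); lra).
    specialize (HK xi Hxr). rewrite Kxi, Rminus_0_l, Rabs_Ropp in HK. lra.
Qed.

Lemma along_css_bounded_near_diagonal u0 v0 (s0 : R) (U W : nat -> R) :
  is_lim_seq U s0 -> is_lim_seq W s0 ->
  (forall k, parallel_pair f (U k) (W k)) -> (forall k, css_denom f (U k) (W k) <> 0) ->
  exists B N, forall k, (N <= k)%nat -> Rabs (along f u0 v0 (css_point f (U k) (W k))) <= B.
Proof.
  intros LU LW Hpp HD.
  destruct (along_css_near_diagonal u0 v0 s0) as [r [Hr Hnear]].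
  destruct (is_lim_seq_epsilon U s0 LU r Hr) as [N1 HN1].
  destruct (is_lim_seq_epsilon W s0 LW r Hr) as [N2 HN2].
  assert (C := continuous_along_curve f Hg u0 v0 s0).
  destruct (is_lim_seq_eventually_bounded _ _ (is_lim_seq_continuous_R _ U s0 C LU)) as [N3 HN3].
  destruct (is_lim_seq_eventually_bounded _ _ (is_lim_seq_continuous_R _ W s0 C LW)) as [N4 HN4].
  exists (Rabs (along f u0 v0 (f s0)) + 1), (max (max N1 N2) (max N3 N4)). intros k Hk.
  eapply Rle_trans; [apply Hnear; auto; [apply HN1 | apply HN2]; lia|].
  apply Rmax_lub; [apply HN3 | apply HN4]; lia.
Qed.

End NearDiagonal.

(** * Limits of parallel pairs whose CSS points escape to infinity *)

Section LimitPairs.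
Variable f : curve.
Hypothesis Hg : generic f.
Let Hcl := generic_closed f Hg.
Variables (U V : nat -> R) (l1 l2 : R).
Hypothesis LU : is_lim_seq U l1.
Hypothesis LV : is_lim_seq V l2.
Hypothesis Hpp : forall k, parallel_pair f (U k) (V k).
Hypothesis HD : forall k, css_denom f (U k) (V k) <> 0.

(** If the CSS points of the pairs escape to infinity, the limit pair is an
    asymptotic pair: it is parallel, its [css_denom] must vanish, and it
    cannot lie on the diagonal (where [along] stays bounded) nor be a
    self-crossing (which is transversal). *)
Lemma limit_pair_asymptotic a b :
  (forall k, INR k < Rabs (along f a b (css_point f (U k) (V k)))) -> asymptotic_pair f l1 l2.
Proof.
  intros Hfar. set (X := fun k => along f a b (css_point f (U k) (V k))) in Hfar.
  assert (Hdet : det (d1 f l1) (d1 f l2) = 0).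
  { symmetry. apply (is_lim_seq_unique_R (fun k => det (d1 f (U k)) (d1 f (V k))));
      [|apply is_lim_seq_det_vel; auto].
    apply (is_lim_seq_ext (fun _ => 0)); [intros; symmetry; apply Hpp | apply is_lim_seq_const]. }
  assert (Hden : css_denom f l1 l2 = 0).
  { apply NNPP. intro HDl. apply (not_eventually_bounded X Hfar).
    destruct (is_lim_seq_eventually_bounded _ _ (is_lim_seq_along_css f Hg a b U V l1 l2 LU LV HDl HD))
      as [N HN].
    eexists; exists N; exact HN. }
  destruct (classic (f l1 = f l2)) as [Hfe|Hfe]; [|split; [split|]; auto].
  exfalso. destruct (classic (same_param l1 l2)) as [[m Hm]|Hsp].
  - set (W := fun k => V k - IZR m).
    assert (LW : is_lim_seq W l1).
    { eapply is_lim_seq_eq_R; [apply is_lim_seq_minus'; [exact LV | apply is_lim_seq_const] | rewrite Hm; ring]. }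
    assert (EW : forall k, V k = W k + IZR m) by (intros; unfold W; ring).
    assert (HppW : forall k, parallel_pair f (U k) (W k)).
    { intros k. apply (parallel_pair_shift f Hcl 0 m). rewrite Rplus_0_r, <- EW. auto. }
    assert (HDW : forall k, css_denom f (U k) (W k) <> 0).
    { intros k. rewrite <- (css_denom_shift f Hcl 0 m), Rplus_0_r, <- EW. auto. }
    apply (not_eventually_bounded X Hfar).
    destruct (along_css_bounded_near_diagonal f Hg a b l1 U W LU LW HppW HDW) as [B [N HB]].
    exists B, N. intros k Hk. unfold X.
    rewrite EW. replace (css_point f (U k) (W k + IZR m)) with (css_point f (U k) (W k)); [apply HB, Hk|].
    rewrite <- (css_point_shift f Hcl 0 m), Rplus_0_r. reflexivity.
  - apply (generic_transversal f Hg l1 l2 Hsp Hfe Hdet).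
Qed.

Lemma across_limit_asymptote : asymptotic_pair f l1 l2 ->
  is_lim_seq (fun k => across f l1 l2 (css_point f (U k) (V k))) 0.
Proof.
  intros Has.
  destruct (generic_asymptotes f Hg l1 l2 Has) as [d [t [Hbr [HDd _]]]].
  destruct (branch_unique f Hg l1 l2 d t Has Hbr) as [r [Hr Hu]].
  destruct (is_lim_seq_epsilon U l1 LU r Hr) as [Na HNa].
  destruct (is_lim_seq_epsilon V l2 LV r Hr) as [Nb HNb].
  assert (Hbranch : forall n, (max Na Nb <= n)%nat -> V n = t (U n)).
  { intros n Hn. apply Hu; [apply HNa | apply HNb | apply Hpp]; lia. }
  apply is_lim_seq_of_epsilon. intros e He.
  destruct (across_branch_small f Hg l1 l2 d t Has Hbr HDd e He) as [rho [Hrho HY]].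
  destruct (is_lim_seq_epsilon U l1 LU rho Hrho) as [Nc HNc].
  exists (max (max Na Nb) Nc). intros n Hn. rewrite Rminus_0_r, (Hbranch n ltac:(lia)).
  apply HY. split; [|apply HNc; lia].
  apply Rabs_pos_lt. intro E. apply (HD n).
  rewrite (Hbranch n ltac:(lia)), (Rminus_diag_uniq _ _ E), (branch_center f l1 l2 d t Hbr). apply Has.
Qed.

End LimitPairs.

Lemma frac_shift_bounds x : 0 <= x + IZR (1 - up x) <= 1.
Proof. destruct (archimed x) as [H1 H2]. rewrite minus_IZR. lra. Qed.

(** * The CSS near an asymptote *)

Section NearAsymptote.
Variable f : curve.
Hypothesis Hg : generic f.
Let Hcl := generic_closed f Hg.
Let Hreg := generic_regular f Hg.
Variables u0 v0 delta : R.
Variable tau : R -> R.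
Hypothesis Has : asymptotic_pair f u0 v0.
Hypothesis Hbr : local_branch f u0 v0 delta tau.
Hypothesis HDd : Derive (branch_denom f tau) u0 <> 0.

Let good_rad0 := good_rad f Hg u0 v0 delta tau Has Hbr HDd.
Let punctured0 := punctured f Hg u0 v0 delta tau Has Hbr HDd.
(* Half the good radius, so that [css_along] stays bounded on the closed
   rings [rho <= |s - u0| <= good_rad / 2]. *)
Let on_branch x := exists s, 0 < Rabs (s - u0) < good_rad0 / 2 /\ x = css_point f s (tau s).

Lemma near_asymptote_on_branch (S T : nat -> R) : is_lim_seq S u0 -> is_lim_seq T v0 ->
  (forall k, parallel_pair f (S k) (T k)) -> (forall k, css_denom f (S k) (T k) <> 0) ->
  exists k, on_branch (css_point f (S k) (T k)).
Proof.
  intros LS LT Hpp HD.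
  destruct (branch_unique f Hg u0 v0 delta tau Has Hbr) as [r [Hr Hu]].
  assert (HR0 : 0 < good_rad0) by apply good_rad_pos.
  assert (He : 0 < Rmin r (good_rad0 / 2)) by (apply Rmin_pos; lra).
  destruct (is_lim_seq_epsilon S u0 LS _ He) as [N1 HN1].
  destruct (is_lim_seq_epsilon T v0 LT _ He) as [N2 HN2].
  set (k := max N1 N2). exists k.
  assert (h1 := HN1 k ltac:(lia)). assert (h2 := HN2 k ltac:(lia)).
  assert (Hm1 := Rmin_l r (good_rad0 / 2)). assert (Hm2 := Rmin_r r (good_rad0 / 2)).
  assert (ET : T k = tau (S k)) by (apply Hu; [lra | lra | apply (Hpp k)]).
  exists (S k). split; [split; [|lra] | rewrite ET; reflexivity].
  apply Rabs_pos_lt. intro E. apply (HD k).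
  rewrite ET, (Rminus_diag_uniq _ _ E), (branch_center f u0 v0 delta tau Hbr). apply Has.
Qed.

(** A limit of parallel pairs whose CSS points escape along [L] is, up to
    periods and order, the pair [(u0, v0)], since there are no double
    asymptotes. *)
Lemma escaping_limit_pair (U V : nat -> R) (l1 l2 : R) :
  is_lim_seq U l1 -> is_lim_seq V l2 ->
  (forall k, parallel_pair f (U k) (V k)) -> (forall k, css_denom f (U k) (V k) <> 0) ->
  is_lim_seq (fun k => across f u0 v0 (css_point f (U k) (V k))) 0 ->
  (forall k, INR k < Rabs (along f u0 v0 (css_point f (U k) (V k)))) ->
  (same_param l1 u0 /\ same_param l2 v0) \/ (same_param l1 v0 /\ same_param l2 u0).
Proof.
  intros LU LV Hpp HD LY HX.
  assert (Has' := limit_pair_asymptotic f Hg U V l1 l2 LU LV Hpp HD u0 v0 HX).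
  assert (LY' := across_limit_asymptote f Hg U V l1 l2 LU LV Hpp HD Has').
  assert (Hne0 : f u0 <> f v0) by apply Has.
  assert (Hne1 : f l1 <> f l2) by apply Has'.
  destruct (far_points_same_line (f u0) (f v0) (f l1) (f l2) _ Hne0 LY LY' HX) as [A1 A2].
  apply (generic_no_double_asymptotes f Hg l1 l2 u0 v0 Has' Has).
  apply same_line_of_det; auto.
Qed.

Lemma escaping_css_on_branch (U V : nat -> R) :
  (forall n, 0 <= U n <= 1 /\ 0 <= V n <= 1) ->
  (forall k, parallel_pair f (U k) (V k)) -> (forall k, css_denom f (U k) (V k) <> 0) ->
  (forall k, Rabs (across f u0 v0 (css_point f (U k) (V k))) < / (INR k + 1)) ->
  (forall k, INR k < Rabs (along f u0 v0 (css_point f (U k) (V k)))) ->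
  exists k, on_branch (css_point f (U k) (V k)).
Proof.
  intros HUV Hpp HD HY HX.
  destruct (bolzano_weierstrass_subseq2 U V 0 1 HUV) as [phi [Hphi [l1 [l2 [L1 L2]]]]].
  set (U' := fun k => U (phi k)). set (V' := fun k => V (phi k)).
  assert (LY : is_lim_seq (fun k => across f u0 v0 (css_point f (U' k) (V' k))) 0).
  { apply is_lim_seq_of_epsilon. intros e He. destruct (archimed_cor1 e He) as [N [HN1 HN2]].
    exists N. intros n Hn. rewrite Rminus_0_r. eapply Rlt_trans; [apply HY|].
    eapply Rle_lt_trans; [|exact HN1]. apply Rinv_le_contravar; [apply lt_0_INR; lia|].
    generalize (le_INR _ _ Hn) (le_INR _ _ (Hphi n)); lra. }
  assert (HX' : forall k, INR k < Rabs (along f u0 v0 (css_point f (U' k) (V' k))))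
    by (intros k; eapply Rle_lt_trans; [apply le_INR, Hphi | apply HX]).
  assert (Hpp' : forall k, parallel_pair f (U' k) (V' k)) by (intros; apply Hpp).
  assert (HD' : forall k, css_denom f (U' k) (V' k) <> 0) by (intros; apply HD).
  assert (Lshift : forall W (l : R) m, is_lim_seq W l -> is_lim_seq (fun k => W k + IZR m) (l + IZR m))
    by (intros; apply is_lim_seq_plus'; auto using is_lim_seq_const).
  destruct (escaping_limit_pair U' V' l1 l2 L1 L2 Hpp' HD' LY HX')
    as [[[k1 E1] [k2 E2]] | [[k1 E1] [k2 E2]]].
  - destruct (near_asymptote_on_branch (fun k => U' k + IZR k1) (fun k => V' k + IZR k2))
      as [k Hk]; [rewrite E1; auto | rewrite E2; auto | intros; apply parallel_pair_shift; auto |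
                  intros; rewrite css_denom_shift; auto |].
    exists (phi k). rewrite css_point_shift in Hk; auto.
  - destruct (near_asymptote_on_branch (fun k => V' k + IZR k2) (fun k => U' k + IZR k1))
      as [k Hk]; [rewrite E2; auto | rewrite E1; auto | intros; apply parallel_pair_shift, parallel_pair_sym; auto |
                  |].
    + intros k. rewrite css_denom_shift; auto. destruct (Hpp' k) as [_ Hdet].
      rewrite (css_denom_sym f Hreg _ _ Hdet).
      apply Rmult_integral_contrapositive. split; [|apply HD'].
      assert (S := tcos_sq f Hreg _ _ Hdet). intro E. rewrite <- Ropp_0 in E.
      apply Ropp_eq_reg in E. rewrite E in S. lra.
    + exists (phi k). rewrite css_point_shift, css_point_sym in Hk; auto; apply Hpp'.
Qed.

Lemma far_css_on_branch : exists eta, 0 < eta /\ exists M0, forall x, CSS f x ->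
  Rabs (across f u0 v0 x) < eta -> M0 < Rabs (along f u0 v0 x) -> on_branch x.
Proof.
  apply NNPP. intro Hn.
  assert (Hbad : forall n : nat, exists p : R * R,
     parallel_pair f (fst p) (snd p) /\ css_denom f (fst p) (snd p) <> 0 /\
     Rabs (across f u0 v0 (css_point f (fst p) (snd p))) < / (INR n + 1) /\
     INR n < Rabs (along f u0 v0 (css_point f (fst p) (snd p))) /\
     ~ on_branch (css_point f (fst p) (snd p))).
  { intros n. apply NNPP. intro h. apply Hn. exists (/ (INR n + 1)).
    split; [apply Rinv_0_lt_compat; generalize (pos_INR n); lra|].
    exists (INR n). intros x [u [v [Hpp [HD ->]]]] HY HX. apply NNPP. intro Hng. apply h.
    exists (u, v). auto. }
  destruct (choice _ Hbad) as [p Hp].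
  set (U := fun n => fst (p n) + IZR (1 - up (fst (p n)))).
  set (V := fun n => snd (p n) + IZR (1 - up (snd (p n)))).
  assert (HxU : forall n, css_point f (U n) (V n) = css_point f (fst (p n)) (snd (p n)))
    by (intros; apply css_point_shift; auto).
  destruct (escaping_css_on_branch U V) as [k Hk].
  - intros; split; apply frac_shift_bounds.
  - intros; apply parallel_pair_shift; auto; apply Hp.
  - intros; unfold U, V; rewrite css_denom_shift; auto; apply Hp.
  - intros; rewrite HxU; apply Hp.
  - intros; rewrite HxU; apply Hp.
  - rewrite HxU in Hk. apply (Hp k), Hk.
Qed.

Lemma css_branch_point s : punctured0 s -> CSS f (css_point f s (tau s)).
Proof.
  intros HP. exists s, (tau s). split; [|split; [|reflexivity]].
  - apply (branch_parallel f u0 v0 delta tau Hbr), (punctured_dom f Hg u0 v0 delta tau Has Hbr HDd s HP).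
  - apply (punctured_denom_neq0 f Hg u0 v0 delta tau Has Hbr HDd s HP).
Qed.

Lemma css_near_asymptote_sides :
  (forall s1 s2, u0 - delta < s1 < u0 -> u0 < s2 < u0 + delta ->
     branch_css_curv_num f tau s1 * branch_css_curv_num f tau s2 < 0) ->
  exists eta, 0 < eta /\ forall eta', 0 < eta' -> exists M, forall x, CSS f x ->
    Rabs (across f u0 v0 x) < eta -> M < Rabs (along f u0 v0 x) ->
    Rabs (across f u0 v0 x) < eta' /\ 0 < side f u0 delta tau * along f u0 v0 x * across f u0 v0 x.
Proof.
  intros Hsc. destruct far_css_on_branch as [eta [Heta [M0 HC]]].
  exists eta. split; auto. intros eta' Heta'.
  destruct (across_branch_small f Hg u0 v0 delta tau Has Hbr HDd eta' Heta') as [r1 [Hr1 HY]].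
  assert (HR0 : 0 < good_rad0) by apply good_rad_pos.
  set (rho := Rmin r1 (good_rad0 / 2)).
  assert (Hrho : 0 < rho) by (apply Rmin_pos; lra).
  destruct (css_along_bounded_away f Hg u0 v0 delta tau Has Hbr HDd rho Hrho) as [B HB].
  exists (Rmax M0 B). intros x Hx HYx HXx.
  destruct (HC x Hx HYx (Rle_lt_trans _ _ _ (Rmax_l M0 B) HXx)) as [s [[Hs0 Hs] ->]].
  assert (Hsr : Rabs (s - u0) < rho).
  { destruct (Rlt_or_le (Rabs (s - u0)) rho) as [h|h]; auto. exfalso.
    assert (Hb := HB s (conj h (Rlt_le _ _ Hs))). unfold css_along in Hb.
    generalize (Rmax_r M0 B). lra. }
  split.
  - apply HY. split; auto. eapply Rlt_le_trans; [exact Hsr | apply Rmin_l].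
  - apply (css_side f Hg u0 v0 delta tau Has Hbr HDd Hsc s). split; auto. unfold good_rad0 in Hs. lra.
Qed.

Lemma css_reaches_both_ends M eta' : 0 < eta' ->
  (exists x, CSS f x /\ M < along f u0 v0 x /\ Rabs (across f u0 v0 x) < eta') /\
  (exists x, CSS f x /\ along f u0 v0 x < - M /\ Rabs (across f u0 v0 x) < eta').
Proof.
  intros Heta'.
  destruct (css_branch_ends f Hg u0 v0 delta tau Has Hbr HDd M eta' Heta')
    as [s1 [s2 [P1 [P2 [X1 [X2 [Y1 Y2]]]]]]].
  split; [exists (css_point f s1 (tau s1)) | exists (css_point f s2 (tau s2))];
    split; auto using css_branch_point.
Qed.

End NearAsymptote.

Theorem proposition4p13 (f : curve) (u0 v0 : R) :
  generic f -> asymptotic_pair f u0 v0 ->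
  exists eps : R, (eps = 1 \/ eps = -1) /\
  exists eta : R, 0 < eta /\
    (* far out along L and within the strip |across| < eta, the CSS tends to L,
       lies on side eps of L at the + end and on side -eps at the - end *)
    (forall eta' : R, 0 < eta' -> exists M : R, forall x : pt,
        CSS f x -> Rabs (across f u0 v0 x) < eta -> M < Rabs (along f u0 v0 x) ->
        Rabs (across f u0 v0 x) < eta' /\
        0 < eps * along f u0 v0 x * across f u0 v0 x) /\
    (* both ends of L are approached by the CSS *)
    (forall M eta' : R, 0 < eta' ->
        (exists x : pt, CSS f x /\ M < along f u0 v0 x /\ Rabs (across f u0 v0 x) < eta') /\
        (exists x : pt, CSS f x /\ along f u0 v0 x < - M /\ Rabs (across f u0 v0 x) < eta')).
Proof.
  intros Hg Has.
  destruct (generic_asymptotes f Hg u0 v0 Has) as [delta [tau [Hbr [HDd Hsc]]]].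
  exists (side f u0 delta tau). split; [apply side_cases|].
  destruct (css_near_asymptote_sides f Hg u0 v0 delta tau Has Hbr HDd Hsc) as [eta [Heta Hside]].
  exists eta. split; [exact Heta|]. split; [exact Hside|].
  intros M eta' Heta'. apply (css_reaches_both_ends f Hg u0 v0 delta tau Has Hbr HDd M eta' Heta').
Qed.
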